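(* Let $L$ be a compound Poisson process, i.e. $\sigma_L=0$ and the Lévy measure $\Pi_L$ of $L$ has finite total mass, and let $-r<T_0<T_1<\dots$ be the jump times and $\Delta L_t$ the jump sizes of $L$. Let $X$ be the CDGARCH$(p,q)$ variance process (the unique strong solution). Then: (a) $\Delta X_t=c_\nu X_{t-}\Delta S_t=c_\nu X_{t-}(\Delta L_t)^2$ for $t\ge -r$; (b) if $f_\nu(-q)=0$, then on each $[T_n,T_{n+1})$, $\xi(X)$ is continuous and $X$ is continuously differentiable with $\frac{d}{dt}X_t=\eta-c_\mu X_t+\xi(X)_t$ for $t\in(T_j,T_{j+1})$. Furthermore, when $p>0$ and $q=0$, $X$ satisfies between consecutive jump times the deterministic delay differential equation $\frac{d}{dt}X_t=\eta-c_\mu X_t+\int_{-p}^0 f_\mu(u)X_{t+u}\,du$ for $t\in(T_j,T_{j+1})$; and when $p=q=0$, $X_t=\frac{\eta}{c_\mu}+\big(X_{T_j+}-\frac{\eta}{c_\mu}\big)e^{-c_\mu(t-T_j)}$ for $t\in(T_j,T_{j+1})$.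
   Context: Let $p,q\ge 0$, $r:=p\vee q$, and $(\Omega,\mathcal F,\mathbb F=(\mathcal F_t)_{t\ge -r},\mathbb P)$ a filtered probability space with the usual conditions, supporting a càdlàg adapted centered Lévy process $(L_t)_{t\ge -r}$, $L_{-r}=0$, with increments independent of the past and stationary, and $\mathbb E[L_1^4]<\infty$; $S=[L,L]$. Parameters: $\eta>0$, $c_\mu,c_\nu>0$, $f_\mu,f_\nu$ nonnegative continuous, supported on $[-p,0]$, $[-q,0]$; $\mu(E)=\int_{E\cap[-p,0]}f_\mu-c_\mu\delta_0(E)$, $\nu(E)=\int_{E\cap[-q,0]}f_\nu+c_\nu\delta_0(E)$. Initial process $\Phi$ càdlàg on $[-r,0]$, adapted to the natural filtration of $L$, $\mathbb E[\sup_{[-r,0]}|\Phi|^2]<\infty$; extend $\Phi_t=\Phi_0$ for $t>0$, $\theta_t=\Phi_t+\eta t\mathbf 1_{[0,\infty)}(t)$. The CDGARCH$(p,q)$ variance process is the unique adapted càdlàg $X$ on $[-r,\infty)$ with $\mathbb E[\sup_{s\in[-r,t]}|X_s|^2]<\infty$ for all $t$, $X=\Phi$ on $[-r,0]$, and $X_t=\theta_t+\int_{-p}^0\int_u^{t+u}X_s\,ds\,\mu(du)+\int_{-q}^0\int_{u+}^{t+u}X_{s-}\,dS_s\,\nu(du)$ for $t>0$. It satisfies $dX_t=(\eta-c_\mu X_t+\xi(X)_t)dt+c_\nu X_{t-}dS_t$, where $\xi(X)_t=\int_{-p}^0 f_\mu(u)X_{t+u}\,du+\int_{-q+}^0 f_\nu(u)X_{t+u-}\,dS_{t+u}$.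 *)

From Stdlib Require Import Reals.
From Coquelicot Require Import Coquelicot.
Open Scope R_scope.

(* Pathwise model of a compound Poisson path on [-r,oo): jump times T 0 < T 1 < ...
   (with -r < T 0, T n -> oo) and jump sizes J n.  All sums below have only finitely
   many nonzero terms, so Coquelicot's [Series] is the finite sum. *)

Definition left_lim (f : R -> R) (t l : R) : Prop :=
  filterlim f (at_left t) (locally l).

(* L_t = gam (t + r) + sum_{T_k <= t} J_k  (a centred compound Poisson process may
   carry a drift gam; L_{-r} = 0) *)
Definition cp_L (gam r : R) (T J : nat -> R) (t : R) : R :=
  gam * (t + r) + Series (fun k => if Rle_dec (T k) t then J k else 0).

(* S = [L,L], S_t = sum_{T_k <= t} J_k^2 *)
Definition cp_S (T J : nat -> R) (t : R) : R :=
  Series (fun k => if Rle_dec (T k) t then (J k) ^ 2 else 0).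

(* pathwise Stieltjes integral  int_{(a,b]} Y_s dS_s  (Y = X_- is the left-limit process) *)
Definition dS_int (T J : nat -> R) (Y : R -> R) (a b : R) : R :=
  Series (fun k => if Rlt_dec a (T k) then
                     if Rle_dec (T k) b then Y (T k) * (J k) ^ 2 else 0
                   else 0).

(* xi(X)_t = int_{-p}^0 f_mu(u) X_{t+u} du + int_{(-q,0]} f_nu(u) X_{(t+u)-} dS_{t+u}
           = int_{-p}^0 f_mu(u) X_{t+u} du + sum_{t-q < T_k <= t} f_nu(T_k - t) X_{T_k-} J_k^2 *)
Definition xi (p q : R) (fmu fnu : R -> R) (T J : nat -> R) (X Xm : R -> R) (t : R) : R :=
  RInt (fun u => fmu u * X (t + u)) (- p) 0
  + Series (fun k => if Rlt_dec (t - q) (T k) then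
                       if Rle_dec (T k) t then fnu (T k - t) * Xm (T k) * (J k) ^ 2 else 0
                     else 0).

(* The CDGARCH(p,q) integral equation at time t > 0, with
   mu(du) = f_mu(u) du on [-p,0] - c_mu delta_0,  nu(du) = f_nu(u) du on [-q,0] + c_nu delta_0,
   theta_t = Phi_0 + eta t = X_0 + eta t. *)
Definition cdgarch_eq (p q eta cmu cnu : R) (fmu fnu : R -> R) (T J : nat -> R)
  (X Xm : R -> R) (t : R) : Prop :=
  X t = X 0 + eta * t
        + (RInt (fun u => fmu u * RInt X u (t + u)) (- p) 0 - cmu * RInt X 0 t)
        + (RInt (fun u => fnu u * dS_int T J Xm u (t + u)) (- q) 0 + cnu * dS_int T J Xm 0 t).

(* On a bounded horizon only finitely many jumps occur, so every term of the integral equation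
   can be studied between consecutive jump times.  The jump term [c_nu int X_- dS] is a step
   function whose jump at [t] is [c_nu X_(t-) (Delta L_t)^2], and all other terms are
   left-continuous; this gives (a).  The mu-term is differentiable with derivative
   [int f_mu(u) X_(t+u) du]: a cadlag [X] has only finitely many jumps of a given size, and they
   spoil the difference quotients only on a set of [u] of small measure.  The nu-term is a finite
   sum of integrals of the continuous [f_nu] over moving windows; its one-sided derivatives agree
   when no jump occurs at [t] and [f_nu (-q) = 0].  Hence [X' = eta - c_mu X + xi(X)] between
   jumps, which for [p = q = 0] is a linear ODE. *)

From Stdlib Require Import Reals.
From Coquelicot Require Import Coquelicot.
From Stdlib Require Import Lra Lia List Classical ClassicalEpsilon.
Open Scope R_scope.
Set Bullet Behavior "Strict Subproofs".

Lemma ball_Rabs (x e y : R) : ball x e y <-> Rabs (y - x) < e.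
Proof. reflexivity. Qed.

Lemma within_locally_intro (D P : R -> Prop) x d :
  0 < d -> (forall y, D y -> Rabs (y - x) < d -> P y) -> within D (locally x) P.
Proof. intros Hd H. exists (mkposreal d Hd). intros y Hy HD. now apply H. Qed.

Lemma filterlim_within_eps (D : R -> Prop) (f : R -> R) x l :
  filterlim f (within D (locally x)) (locally l) <->
  forall e, 0 < e -> exists d, 0 < d /\ forall y, D y -> Rabs (y - x) < d -> Rabs (f y - l) < e.
Proof.
  rewrite filterlim_locally. split.
  - intros H e He. destruct (H (mkposreal e He)) as [d Hd].
    exists d. split; [apply cond_pos|]. intros y HD Hy. exact (Hd y Hy HD).
  - intros H e. destruct (H e (cond_pos e)) as [d [Hd H']].
    now apply (within_locally_intro D _ x d).
Qed.

Lemma filterlim_at_right_eps (f : R -> R) x l :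
  filterlim f (at_right x) (locally l) <->
  forall e, 0 < e -> exists d, 0 < d /\ forall y, x < y < x + d -> Rabs (f y - l) < e.
Proof.
  unfold at_right. rewrite filterlim_within_eps.
  split; intros H e He; destruct (H e He) as [d [Hd H']]; exists d; split; auto;
    intros y Hy; [|intros Hyd; rewrite Rabs_right in Hyd by lra];
    apply H'; try rewrite Rabs_right; lra.
Qed.

Lemma filterlim_at_left_eps (f : R -> R) x l :
  filterlim f (at_left x) (locally l) <->
  forall e, 0 < e -> exists d, 0 < d /\ forall y, x - d < y < x -> Rabs (f y - l) < e.
Proof.
  unfold at_left. rewrite filterlim_within_eps.
  split; intros H e He; destruct (H e He) as [d [Hd H']]; exists d; split; auto;
    intros y Hy; [|intros Hyd; rewrite Rabs_left in Hyd by lra];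
    apply H'; try rewrite Rabs_left; lra.
Qed.

Section FilterArith.
Context {T0 : Type} {F : (T0 -> Prop) -> Prop} {FF : Filter F}.

Lemma lim_plus (f g : T0 -> R) a b :
  filterlim f F (locally a) -> filterlim g F (locally b) ->
  filterlim (fun x => f x + g x) F (locally (a + b)).
Proof.
  intros Hf Hg. eapply filterlim_comp_2; [exact Hf | exact Hg | apply (filterlim_plus a b)].
Qed.

Lemma lim_mult (f g : T0 -> R) a b :
  filterlim f F (locally a) -> filterlim g F (locally b) ->
  filterlim (fun x => f x * g x) F (locally (a * b)).
Proof.
  intros Hf Hg. eapply filterlim_comp_2; [exact Hf | exact Hg | apply (filterlim_mult a b)].
Qed.

Lemma lim_scal (f : T0 -> R) c a :
  filterlim f F (locally a) -> filterlim (fun x => c * f x) F (locally (c * a)).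
Proof. intros Hf. apply lim_mult; [apply filterlim_const | exact Hf]. Qed.

Lemma lim_minus (f g : T0 -> R) a b :
  filterlim f F (locally a) -> filterlim g F (locally b) ->
  filterlim (fun x => f x - g x) F (locally (a - b)).
Proof.
  intros Hf Hg. replace (a - b) with (a + -1 * b) by ring.
  apply (filterlim_ext (fun x => f x + -1 * g x)); [intros; ring|].
  now apply lim_plus, lim_scal.
Qed.

Lemma lim_sum_n (f : nat -> T0 -> R) (l : nat -> R) N :
  (forall k, (k <= N)%nat -> filterlim (f k) F (locally (l k))) ->
  filterlim (fun x => sum_n (fun k => f k x) N) F (locally (sum_n l N)).
Proof.
  induction N as [|N IH]; intros H.
  - rewrite sum_O. apply (filterlim_ext (f 0%nat)); [intros; now rewrite sum_O|]. apply H; lia.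
  - rewrite sum_Sn. apply (filterlim_ext (fun x => sum_n (fun k => f k x) N + f (S N) x)).
    { intros; now rewrite sum_Sn. }
    apply lim_plus; [apply IH; intros; apply H; lia | apply H; lia].
Qed.

End FilterArith.

Lemma filterlim_shift_at_left x :
  filterlim (fun y => y - x) (at_left x) (at_left 0).
Proof.
  intros P [d Hd]. exists d. intros y Hy Hyx. apply Hd; [|simpl; lra].
  apply ball_Rabs. apply ball_Rabs in Hy. now replace (y - x - 0) with (y - x) by ring.
Qed.

Lemma left_continuous_of_left_quotient (f : R -> R) x l :
  filterlim (fun h => (f (x + h) - f x) / h) (at_left 0) (locally l) ->
  filterlim f (at_left x) (locally (f x)).
Proof.
  intros H.
  pose proof (filterlim_comp _ _ _ _ _ _ _ _ (filterlim_shift_at_left x) H) as Hq.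
  assert (Hs : filterlim (fun y => y - x) (at_left x) (locally 0)).
  { eapply filterlim_filter_le_2; [|apply filterlim_shift_at_left]. apply filter_le_within. }
  apply (filterlim_ext_loc (fun y => f x + (y - x) * ((f (x + (y - x)) - f x) / (y - x)))).
  - exists (mkposreal 1 Rlt_0_1). intros y _ Hy. simpl in Hy.
    rewrite Rplus_minus. field. lra.
  - pose proof (lim_plus _ _ _ _ (filterlim_const (f x)) (lim_mult _ _ _ _ Hs Hq)) as L.
    now rewrite Rmult_0_l, Rplus_0_r in L.
Qed.

Lemma is_derive_of_one_sided (f : R -> R) x l :
  filterlim (fun h => (f (x + h) - f x) / h) (at_right 0) (locally l) ->
  filterlim (fun h => (f (x + h) - f x) / h) (at_left 0) (locally l) ->
  is_derive f x l.
Proof.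
  unfold at_right, at_left. rewrite !filterlim_within_eps. intros H1 H2.
  apply is_derive_Reals. intros e He.
  destruct (H1 e He) as [d1 [Hd1 K1]], (H2 e He) as [d2 [Hd2 K2]].
  exists (mkposreal _ (Rmin_pos _ _ Hd1 Hd2)). intros h Hh0 Hh. simpl in Hh.
  pose proof (Rmin_l d1 d2). pose proof (Rmin_r d1 d2).
  destruct (Rlt_dec 0 h); [apply K1 | apply K2]; rewrite ?Rminus_0_r; lra.
Qed.

Lemma filterlim_within_subdomain {T0 : UniformSpace} (D D' : R -> Prop) (f : R -> T0) x L d :
  0 < d -> (forall y, D' y -> Rabs (y - x) < d -> D y) ->
  filterlim f (within D (locally x)) (locally L) -> filterlim f (within D' (locally x)) (locally L).
Proof.
  intros Hd HD H P HP. destruct (H P HP) as [eps He].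
  apply (within_locally_intro _ _ x (Rmin eps d)); [apply Rmin_pos; [apply cond_pos | lra]|].
  intros y Hy Hyx. pose proof (Rmin_l eps d). pose proof (Rmin_r eps d).
  apply He; [apply ball_Rabs; lra | apply HD; auto; lra].
Qed.

(** * Cadlag functions on a compact interval *)

Lemma cousin (a b : R) (Q : R -> R -> Prop) :
  a <= b ->
  (forall x, Q x x) ->
  (forall x y z, a <= x -> x <= y -> y <= z -> z <= b -> Q x y -> Q y z -> Q x z) ->
  (forall x, a <= x <= b -> exists d, 0 < d /\
      (forall y, a <= y -> x - d < y < x -> Q y x) /\
      (forall y, y <= b -> x < y < x + d -> Q x y)) ->
  Q a b.
Proof.
  intros Hab Hrefl Hglue Hloc.
  set (E := fun y => a <= y <= b /\ Q a y).
  assert (Hb : bound E) by (exists b; intros y [Hy _]; lra).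
  assert (He : exists y, E y) by (exists a; split; [lra | apply Hrefl]).
  destruct (completeness E Hb He) as [s [Hub Hlub]].
  assert (Has : a <= s) by (apply Hub; split; [lra | apply Hrefl]).
  assert (Hsb : s <= b) by (apply Hlub; intros y [Hy _]; lra).
  destruct (Hloc s (conj Has Hsb)) as [d [Hd [HL HR]]].
  assert (HQs : Q a s).
  { destruct (Req_dec s a) as [-> | Nsa]; [apply Hrefl|].
    assert (Hex : exists y, E y /\ s - d < y).
    { apply NNPP. intro Hn. assert (s <= s - d); [|lra].
      apply Hlub. intros y Hy. apply Rnot_lt_le. intro Hlt. apply Hn. now exists y. }
    destruct Hex as [y [[Hy1 Hy2] Hy3]].
    assert (y <= s) by (apply Hub; now split).
    destruct (Req_dec y s) as [<- | Nys]; [exact Hy2|].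
    apply (Hglue a y s); try lra; auto. apply HL; lra. }
  destruct (Req_dec s b) as [<- | Nsb]; [exact HQs|].
  set (z := Rmin b (s + d / 2)).
  assert (Hz1 : s < z) by (apply Rmin_Rgt_r; lra).
  assert (Hz2 : z <= b) by apply Rmin_l.
  assert (Hz3 : z < s + d) by (eapply Rle_lt_trans; [apply Rmin_r | lra]).
  assert (Ez : E z) by (split; [lra|]; apply (Hglue a s z); try lra; auto; apply HR; lra).
  assert (z <= s) by (apply Hub; auto). lra.
Qed.

Definition cadlag (f : R -> R) (a b : R) : Prop :=
  (forall x, a <= x < b -> filterlim f (at_right x) (locally (f x))) /\
  (forall x, a < x <= b -> exists l, filterlim f (at_left x) (locally l)).

Lemma cadlag_cousin (f : R -> R) (a b e : R) (Q : R -> R -> Prop) :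
  a <= b -> 0 < e -> cadlag f a b ->
  (forall x, Q x x) ->
  (forall x y z, a <= x -> x <= y -> y <= z -> z <= b -> Q x y -> Q y z -> Q x z) ->
  (forall y z, a <= y -> y < z -> z <= b ->
     (forall v w, y < v < z -> y < w < z -> Rabs (f v - f w) <= e) -> Q y z) ->
  Q a b.
Proof.
  intros Hab He [Hr Hl] Hrefl Hglue Hpiece.
  assert (Hosc : forall l x y, Rabs (f x - l) < e / 2 -> Rabs (f y - l) < e / 2 ->
                   Rabs (f x - f y) <= e).
  { intros l x y Hx Hy. replace (f x - f y) with ((f x - l) - (f y - l)) by ring.
    eapply Rle_trans; [apply Rabs_triang|]. rewrite Rabs_Ropp. lra. }
  apply cousin; auto. intros x Hx.
  assert (HR : exists d, 0 < d /\ forall y, y <= b -> x < y < x + d -> Q x y).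
  { destruct (Rlt_dec x b) as [Hxb | Hxb]; [|exists 1; split; [lra | intros; lra]].
    destruct (proj1 (filterlim_at_right_eps f x (f x)) (Hr x (conj (proj1 Hx) Hxb)) (e / 2))
      as [d [Hd H]]; [lra|].
    exists d. split; auto. intros y Hyb Hy. apply Hpiece; try lra.
    intros v w Hv Hw. apply (Hosc (f x)); apply H; lra. }
  assert (HL : exists d, 0 < d /\ forall y, a <= y -> x - d < y < x -> Q y x).
  { destruct (Rlt_dec a x) as [Hxa | Hxa]; [|exists 1; split; [lra | intros; lra]].
    destruct (Hl x (conj Hxa (proj2 Hx))) as [l Hlim].
    destruct (proj1 (filterlim_at_left_eps f x l) Hlim (e / 2)) as [d [Hd H]]; [lra|].
    exists d. split; auto. intros y Hya Hy. apply Hpiece; try lra.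
    intros v w Hv Hw. apply (Hosc l); apply H; lra. }
  destruct HR as [d1 [Hd1 HR]], HL as [d2 [Hd2 HL]].
  exists (Rmin d1 d2). pose proof (Rmin_l d1 d2). pose proof (Rmin_r d1 d2).
  split; [now apply Rmin_pos|].
  split; intros y Hy1 Hy2; [apply HL | apply HR]; auto; lra.
Qed.

Lemma ex_RInt_uniform_approx (f : R -> R) a b : a <= b ->
  (forall e, 0 < e -> exists g, ex_RInt g a b /\ forall x, a <= x <= b -> Rabs (f x - g x) <= e) ->
  ex_RInt f a b.
Proof.
  intros Hab H. apply ex_RInt_Reals_1. intro eps.
  assert (He : 0 < eps / (2 * (b - a + 1))) by (apply Rdiv_lt_0_compat; [apply cond_pos | lra]).
  set (e := eps / (2 * (b - a + 1))) in *.
  destruct (constructive_indefinite_description _ (H e He)) as [g [Hg Hfg]].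
  assert (He2 : 0 < eps / 2) by (pose proof (cond_pos eps); lra).
  destruct (ex_RInt_Reals_0 _ _ _ Hg (mkposreal _ He2)) as [phi [psi [H1 H2]]].
  rewrite Rmin_left, Rmax_right in H1 by lra.
  exists phi, (mkStepFun (StepFun_P28 1 psi (mkStepFun (StepFun_P4 a b e)))).
  split.
  - intros t Ht. rewrite Rmin_left, Rmax_right in Ht by lra. simpl. unfold fct_cte.
    replace (f t - phi t) with ((f t - g t) + (g t - phi t)) by ring.
    eapply Rle_trans; [apply Rabs_triang|]. pose proof (Hfg t Ht). pose proof (H1 t Ht). lra.
  - rewrite StepFun_P30, StepFun_P18. simpl in H2.
    eapply Rle_lt_trans; [apply Rabs_triang|].
    rewrite Rmult_1_l, (Rabs_right (e * (b - a))) by (apply Rle_ge, Rmult_le_pos; lra).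
    assert (e * (b - a) <= eps / 2); [|lra].
    unfold e, Rdiv. rewrite Rmult_assoc.
    assert (eps * (/ (2 * (b - a + 1)) * (b - a)) <= eps * / 2); [|lra].
    apply Rmult_le_compat_l; [pose proof (cond_pos eps); lra|].
    apply (Rmult_le_reg_l (2 * (b - a + 1))); [lra|]. field_simplify; lra.
Qed.

Lemma cadlag_ex_RInt f a b : a <= b -> cadlag f a b -> ex_RInt f a b.
Proof.
  intros Hab Hc. apply ex_RInt_uniform_approx; auto. intros e He.
  apply (cadlag_cousin f a b e (fun y z => exists g, ex_RInt g y z /\
                                  forall x, y <= x <= z -> Rabs (f x - g x) <= e)); auto.
  - intros x. exists f. split; [apply ex_RInt_point|].
    intros; rewrite Rminus_diag, Rabs_R0; lra.
  - intros x y z _ Hxy Hyz _ [g1 [Hg1 H1]] [g2 [Hg2 H2]].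
    exists (fun u => if Rle_dec u y then g1 u else g2 u). split.
    + apply ex_RInt_Chasles with y; [apply (ex_RInt_ext g1) | apply (ex_RInt_ext g2)]; auto;
        intros u Hu; rewrite Rmin_left, Rmax_right in Hu by lra;
        destruct (Rle_dec u y); auto; lra.
    + intros u Hu. destruct (Rle_dec u y); [apply H1 | apply H2]; lra.
  - intros y z _ Hyz _ Hosc. set (m := (y + z) / 2).
    exists (fun u => if Rlt_dec y u then if Rlt_dec u z then f m else f u else f u). split.
    + apply (ex_RInt_ext (fun _ => f m)); [|apply ex_RInt_const].
      intros u Hu. rewrite Rmin_left, Rmax_right in Hu by lra.
      destruct (Rlt_dec y u); [|lra]. destruct (Rlt_dec u z); auto; lra.
    + intros u Hu. destruct (Rlt_dec y u); [destruct (Rlt_dec u z)|];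
        try (rewrite Rminus_diag, Rabs_R0; lra).
      apply Hosc; unfold m; lra.
Qed.

Lemma cadlag_bounded f a b :
  a <= b -> cadlag f a b -> exists B, 0 <= B /\ forall x, a <= x <= b -> Rabs (f x) <= B.
Proof.
  intros Hab Hc.
  assert (H : exists B, forall x, a <= x <= b -> Rabs (f x) <= B).
  { apply (cadlag_cousin f a b 1 (fun y z => exists B, forall x, y <= x <= z -> Rabs (f x) <= B));
      auto; try lra.
    - intros x. exists (Rabs (f x)). intros u Hu. replace u with x by lra. lra.
    - intros x y z _ Hxy Hyz _ [B1 H1] [B2 H2]. exists (Rmax B1 B2). intros u Hu.
      destruct (Rle_dec u y).
      + eapply Rle_trans; [apply H1; lra | apply Rmax_l].
      + eapply Rle_trans; [apply H2; lra | apply Rmax_r].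
    - intros y z _ Hyz _ Hosc. set (m := (y + z) / 2).
      exists (Rabs (f y) + Rabs (f z) + (Rabs (f m) + 1)). intros u Hu.
      pose proof (Rabs_pos (f y)). pose proof (Rabs_pos (f z)). pose proof (Rabs_pos (f m)).
      destruct (Req_dec u y) as [-> | ]; [lra|]. destruct (Req_dec u z) as [-> | ]; [lra|].
      pose proof (Hosc u m ltac:(unfold m; lra) ltac:(unfold m; lra)).
      replace (f u) with ((f u - f m) + f m) by ring.
      eapply Rle_trans; [apply Rabs_triang | lra]. }
  destruct H as [B HB]. exists B. split; auto.
  pose proof (HB a ltac:(lra)). pose proof (Rabs_pos (f a)). lra.
Qed.

Definition avoids (P : list R) (v w : R) := forall x, In x P -> ~ (Rmin v w <= x <= Rmax v w).

(* Only finitely many jumps of a cadlag function exceed [e]. *)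
Lemma cadlag_small_oscillation f a b e : a <= b -> 0 < e -> cadlag f a b ->
  exists P : list R, forall v w, a <= v <= b -> a <= w <= b -> avoids P v w ->
    Rabs (f v - f w) <= e.
Proof.
  intros Hab He Hc.
  apply (cadlag_cousin f a b e (fun y z => exists P : list R, forall v w, y <= v <= z ->
           y <= w <= z -> avoids P v w -> Rabs (f v - f w) <= e)); auto.
  - intros x. exists nil. intros v w Hv Hw _. replace v with x by lra. replace w with x by lra.
    rewrite Rminus_diag, Rabs_R0; lra.
  - intros x y z _ Hxy Hyz _ [P1 H1] [P2 H2]. exists (y :: P1 ++ P2).
    intros v w Hv Hw Hav.
    assert (Hy : ~ (Rmin v w <= y <= Rmax v w)) by (apply Hav; now left).
    assert (Hav1 : avoids P1 v w) by (intros u Hu; apply Hav; right; apply in_or_app; auto).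
    assert (Hav2 : avoids P2 v w) by (intros u Hu; apply Hav; right; apply in_or_app; auto).
    unfold Rmin, Rmax in Hy. destruct (Rle_dec v w), (Rle_dec v y).
    + apply H1; auto; lra.
    + apply H2; auto; lra.
    + apply H1; auto; lra.
    + apply H2; auto; lra.
  - intros y z _ Hyz _ Hosc. exists (y :: z :: nil). intros v w Hv Hw Hav.
    assert (Hy : ~ (Rmin v w <= y <= Rmax v w)) by (apply Hav; now left).
    assert (Hz : ~ (Rmin v w <= z <= Rmax v w)) by (apply Hav; right; now left).
    unfold Rmin, Rmax in Hy, Hz. destruct (Rle_dec v w); apply Hosc; lra.
Qed.

Lemma cadlag_plus f g a b : cadlag f a b -> cadlag g a b -> cadlag (fun u => f u + g u) a b.
Proof.
  intros [Hf1 Hf2] [Hg1 Hg2]. split.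
  - intros x Hx. apply lim_plus; auto.
  - intros x Hx. destruct (Hf2 x Hx) as [l1 H1], (Hg2 x Hx) as [l2 H2].
    exists (l1 + l2). now apply lim_plus.
Qed.

Lemma cadlag_mult f g a b : cadlag f a b -> cadlag g a b -> cadlag (fun u => f u * g u) a b.
Proof.
  intros [Hf1 Hf2] [Hg1 Hg2]. split.
  - intros x Hx. apply lim_mult; auto.
  - intros x Hx. destruct (Hf2 x Hx) as [l1 H1], (Hg2 x Hx) as [l2 H2].
    exists (l1 * l2). now apply lim_mult.
Qed.

Lemma cadlag_const c a b : cadlag (fun _ => c) a b.
Proof. split; intros; [|exists c]; apply filterlim_const. Qed.

Lemma cadlag_scal c f a b : cadlag f a b -> cadlag (fun u => c * f u) a b.
Proof. intros; apply cadlag_mult; auto; apply cadlag_const. Qed.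

Lemma cadlag_minus f g a b : cadlag f a b -> cadlag g a b -> cadlag (fun u => f u - g u) a b.
Proof.
  intros [Hf1 Hf2] [Hg1 Hg2]. split.
  - intros x Hx. apply lim_minus; auto.
  - intros x Hx. destruct (Hf2 x Hx) as [l1 H1], (Hg2 x Hx) as [l2 H2].
    exists (l1 - l2). now apply lim_minus.
Qed.

Lemma cadlag_subinterval f a b a' b' : a <= a' -> b' <= b -> cadlag f a b -> cadlag f a' b'.
Proof. intros H1 H2 [Hr Hl]. split; intros x Hx; [apply Hr | apply Hl]; lra. Qed.

Lemma cadlag_shift f a b c : cadlag f a b -> cadlag (fun u => f (c + u)) (a - c) (b - c).
Proof.
  intros [Hr Hl]. split.
  - intros x Hx. apply filterlim_at_right_eps. intros e He.
    destruct (proj1 (filterlim_at_right_eps _ _ _) (Hr (c + x) ltac:(lra)) e He) as [d [Hd H]].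
    exists d. split; auto. intros y Hy. apply H. lra.
  - intros x Hx. destruct (Hl (c + x) ltac:(lra)) as [l Hl']. exists l.
    apply filterlim_at_left_eps. intros e He.
    destruct (proj1 (filterlim_at_left_eps _ _ _) Hl' e He) as [d [Hd H]].
    exists d. split; auto. intros y Hy. apply H. lra.
Qed.

Lemma cadlag_of_continuous_on f a b :
  (forall x, a <= x <= b ->
     filterlim f (within (fun v => a <= v <= b) (locally x)) (locally (f x))) ->
  cadlag f a b.
Proof.
  intros H. split; [|intros x Hx; exists (f x)]; intros;
    unfold at_right, at_left; rewrite filterlim_within_eps; intros e He;
    destruct (proj1 (filterlim_within_eps _ _ _ _) (H x ltac:(lra)) e He) as [d [Hd K]].
  - exists (Rmin d (b - x)). pose proof (Rmin_l d (b - x)). pose proof (Rmin_r d (b - x)).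
    split; [apply Rmin_pos; lra|]. intros y Hy Hyd. rewrite Rabs_right in Hyd by lra.
    apply K; [lra | rewrite Rabs_right; lra].
  - exists (Rmin d (x - a)). pose proof (Rmin_l d (x - a)). pose proof (Rmin_r d (x - a)).
    split; [apply Rmin_pos; lra|]. intros y Hy Hyd. rewrite Rabs_left in Hyd by lra.
    apply K; [lra | rewrite Rabs_left; lra].
Qed.

Lemma cadlag_lipschitz (f : R -> R) a b L : 0 <= L ->
  (forall x y, a <= x <= b -> a <= y <= b -> Rabs (f x - f y) <= L * Rabs (x - y)) ->
  cadlag f a b.
Proof.
  intros HL H. apply cadlag_of_continuous_on. intros x Hx. rewrite filterlim_within_eps.
  intros e He. exists (e / (L + 1)). split; [apply Rdiv_lt_0_compat; lra|].
  intros y Hy Hyx. eapply Rle_lt_trans; [apply H; lra|].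
  apply Rle_lt_trans with ((L + 1) * Rabs (y - x)); [pose proof (Rabs_pos (y - x)); nra|].
  apply Rlt_le_trans with ((L + 1) * (e / (L + 1))); [apply Rmult_lt_compat_l; lra|].
  right. field. lra.
Qed.

Definition indicator (al be u : R) : R :=
  if Rle_dec al u then (if Rlt_dec u be then 1 else 0) else 0.

Lemma indicator_bounds al be u : 0 <= indicator al be u <= 1.
Proof. unfold indicator. repeat destruct Rle_dec; repeat destruct Rlt_dec; lra. Qed.

Lemma filterlim_locally_constant (F : (R -> Prop) -> Prop) (f : R -> R) c :
  Filter F -> F (fun y => f y = c) -> filterlim f F (locally c).
Proof.
  intros FF H. apply (filterlim_ext_loc (fun _ => c)); [|apply filterlim_const].
  now apply (filter_imp _ _ (fun y Hy => eq_sym Hy)).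
Qed.

Lemma cadlag_indicator al be a b : cadlag (indicator al be) a b.
Proof.
  assert (Hr : forall x, exists d, 0 < d /\ forall y, x < y < x + d ->
                                      indicator al be y = indicator al be x).
  { intros x. unfold indicator.
    destruct (Rlt_dec x al); [|destruct (Rlt_dec x be)].
    - exists (al - x). split; [lra|]. intros y Hy.
      destruct (Rle_dec al y), (Rle_dec al x); lra.
    - exists (be - x). split; [lra|]. intros y Hy.
      destruct (Rle_dec al y), (Rle_dec al x), (Rlt_dec y be), (Rlt_dec x be); lra.
    - exists 1. split; [lra|]. intros y Hy.
      destruct (Rle_dec al y), (Rle_dec al x), (Rlt_dec y be), (Rlt_dec x be); lra. }
  assert (Hl : forall x, exists c d, 0 < d /\ forall y, x - d < y < x -> indicator al be y = c).
  { intros x. unfold indicator.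
    destruct (Rle_dec x al); [|destruct (Rle_dec x be)].
    - exists 0, 1. split; [lra|]. intros y Hy. destruct (Rle_dec al y); lra.
    - exists 1, (x - al). split; [lra|]. intros y Hy.
      destruct (Rle_dec al y), (Rlt_dec y be); lra.
    - exists 0, (x - be). split; [lra|]. intros y Hy.
      destruct (Rle_dec al y), (Rlt_dec y be); lra. }
  split.
  - intros x _. destruct (Hr x) as [d [Hd H]].
    apply filterlim_locally_constant; [apply at_right_proper_filter|].
    apply (within_locally_intro _ _ x d Hd). intros y Hy Hyd. apply Rabs_lt_between' in Hyd.
    apply H. lra.
  - intros x _. destruct (Hl x) as [c [d [Hd H]]]. exists c.
    apply filterlim_locally_constant; [apply at_left_proper_filter|].
    apply (within_locally_intro _ _ x d Hd). intros y Hy Hyd. apply Rabs_lt_between' in Hyd.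
    apply H. lra.
Qed.

Lemma RInt_extR (f g : R -> R) a b :
  (forall x, Rmin a b < x < Rmax a b -> f x = g x) -> RInt f a b = RInt g a b.
Proof. apply RInt_ext. Qed.

Lemma RInt_plusR (f g : R -> R) a b : ex_RInt f a b -> ex_RInt g a b ->
  RInt (fun x => f x + g x) a b = RInt f a b + RInt g a b.
Proof. apply (RInt_plus f g a b). Qed.

Lemma RInt_minusR (f g : R -> R) a b : ex_RInt f a b -> ex_RInt g a b ->
  RInt (fun x => f x - g x) a b = RInt f a b - RInt g a b.
Proof. apply (RInt_minus f g a b). Qed.

Lemma RInt_scalR (f : R -> R) a b c : ex_RInt f a b -> RInt (fun x => c * f x) a b = c * RInt f a b.
Proof. apply (RInt_scal f a b c). Qed.

Lemma RInt_ChaslesR (f : R -> R) a b c : ex_RInt f a b -> ex_RInt f b c ->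
  RInt f a b + RInt f b c = RInt f a c.
Proof. apply (RInt_Chasles f a b c). Qed.

Lemma RInt_constR a b c : RInt (fun _ => c) a b = c * (b - a).
Proof. rewrite RInt_const. simpl. unfold scal; simpl; unfold mult; simpl. ring. Qed.

Lemma RInt_swapR (f : R -> R) a b : ex_RInt f a b -> RInt f b a = - RInt f a b.
Proof. intros H. now rewrite <- (opp_RInt_swap f a b H). Qed.

Lemma RInt_pointR (f : R -> R) a : RInt f a a = 0.
Proof. apply (RInt_point a f). Qed.

Lemma ex_RInt_sum_n (f : nat -> R -> R) a b N :
  (forall k, (k <= N)%nat -> ex_RInt (f k) a b) ->
  ex_RInt (fun u => sum_n (fun k => f k u) N) a b.
Proof.
  induction N as [|N IH]; intros H.
  - apply (ex_RInt_ext (f 0%nat)); [intros; now rewrite sum_O | apply H; lia].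
  - apply (ex_RInt_ext (fun u => sum_n (fun k => f k u) N + f (S N) u)).
    { intros; now rewrite sum_Sn. }
    apply (ex_RInt_plus (V := R_CompleteNormedModule)); [apply IH; intros; apply H | apply H]; lia.
Qed.

Lemma RInt_sum_n (f : nat -> R -> R) a b N :
  (forall k, (k <= N)%nat -> ex_RInt (f k) a b) ->
  RInt (fun u => sum_n (fun k => f k u) N) a b = sum_n (fun k => RInt (f k) a b) N.
Proof.
  induction N as [|N IH]; intros H.
  - rewrite sum_O. apply RInt_ext. intros; now rewrite sum_O.
  - rewrite sum_Sn. rewrite (RInt_ext _ (fun u => sum_n (fun k => f k u) N + f (S N) u)).
    2:{ intros; now rewrite sum_Sn. }
    rewrite RInt_plusR, IH; [reflexivity | | apply ex_RInt_sum_n | ]; intros; apply H; lia.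
Qed.

Lemma abs_RInt_le_fun (f g : R -> R) a b : a <= b -> ex_RInt f a b -> ex_RInt g a b ->
  (forall x, a < x < b -> Rabs (f x) <= g x) -> Rabs (RInt f a b) <= RInt g a b.
Proof.
  intros Hab Hf Hg H. eapply Rle_trans; [now apply abs_RInt_le|].
  apply RInt_le; [exact Hab | apply (ex_RInt_norm f a b Hf) | exact Hg | intros; now apply H].
Qed.

Lemma RInt_le_const (f : R -> R) a b M : a <= b -> ex_RInt f a b ->
  (forall x, a < x < b -> f x <= M) -> RInt f a b <= M * (b - a).
Proof. intros. rewrite <- RInt_constR. apply RInt_le; auto. apply ex_RInt_const. Qed.

Definition clamp (a b x : R) := Rmax a (Rmin b x).

Lemma clamp_bounds a b x : a <= b -> a <= clamp a b x <= b.
Proof. intros. unfold clamp, Rmax, Rmin. repeat destruct Rle_dec; lra. Qed.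

Lemma clamp_id a b x : a <= x <= b -> clamp a b x = x.
Proof. intros. unfold clamp, Rmax, Rmin. repeat destruct Rle_dec; lra. Qed.

Lemma clamp_le a b x : b <= x -> a <= b -> clamp a b x = b.
Proof. intros. unfold clamp, Rmax, Rmin. repeat destruct Rle_dec; lra. Qed.

Lemma clamp_ge a b x : x <= a -> a <= b -> clamp a b x = a.
Proof. intros. unfold clamp, Rmax, Rmin. repeat destruct Rle_dec; lra. Qed.

Lemma clamp_diff a b al be : a <= b -> al <= be ->
  0 <= clamp a b be - clamp a b al <= be - al.
Proof. intros. unfold clamp, Rmax, Rmin. repeat destruct Rle_dec; lra. Qed.

Lemma indicator_clamp a b al be x : a < x < b ->
  indicator al be x = indicator (clamp a b al) (clamp a b be) x.
Proof.
  intros. unfold indicator, clamp, Rmax, Rmin.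
  repeat destruct Rle_dec; repeat destruct Rlt_dec; lra.
Qed.

Lemma RInt_mult_indicator (g : R -> R) a b al be : a <= b -> al <= be -> cadlag g a b ->
  RInt (fun u => g u * indicator al be u) a b = RInt g (clamp a b al) (clamp a b be).
Proof.
  intros Hab Hal Hg.
  pose proof (clamp_bounds a b al Hab) as Hca. pose proof (clamp_bounds a b be Hab) as Hcb.
  pose proof (clamp_diff a b al be Hab Hal).
  set (ca := clamp a b al) in *. set (cb := clamp a b be) in *.
  assert (Hex : forall f x y, cadlag f a b -> a <= x -> x <= y -> y <= b -> ex_RInt f x y).
  { intros f x y Hf H1 H2 H3. apply cadlag_ex_RInt; auto.
    eapply cadlag_subinterval; [| |apply Hf]; lra. }
  assert (Hgi : cadlag (fun u => g u * indicator ca cb u) a b).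
  { apply cadlag_mult; [exact Hg | apply cadlag_indicator]. }
  rewrite (RInt_ext _ (fun u => g u * indicator ca cb u)).
  2:{ intros x Hx. rewrite Rmin_left, Rmax_right in Hx by lra. f_equal. now apply indicator_clamp. }
  rewrite <- (RInt_ChaslesR _ a ca b), <- (RInt_ChaslesR _ ca cb b); try (apply Hex; auto; lra).
  rewrite (RInt_ext _ (fun _ => 0) a ca), (RInt_ext _ (fun _ => 0) cb b), (RInt_ext _ g ca cb),
    !RInt_constR, !Rmult_0_l, Rplus_0_l, Rplus_0_r; [reflexivity | | |];
  intros x Hx; rewrite ?Rmin_left, ?Rmax_right in Hx by lra; unfold indicator;
    repeat destruct Rle_dec; repeat destruct Rlt_dec; try ring; lra.
Qed.

Section Primitive.
Variables (X : R -> R) (c M B : R).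
Hypothesis HX : cadlag X c M.
Hypothesis HB : forall x, c <= x <= M -> Rabs (X x) <= B.

Lemma ex_RInt_cadlag a b : c <= a <= M -> c <= b <= M -> ex_RInt X a b.
Proof.
  intros Ha Hb. destruct (Rle_dec a b); [|apply ex_RInt_swap];
    (apply cadlag_ex_RInt; [lra | eapply cadlag_subinterval; [| |apply HX]; lra]).
Qed.

Lemma RInt_cadlag_Chasles a b : c <= a <= M -> c <= b <= M -> RInt X a b = RInt X c b - RInt X c a.
Proof.
  intros Ha Hb.
  pose proof (RInt_ChaslesR X c a b (ex_RInt_cadlag c a ltac:(lra) Ha) (ex_RInt_cadlag a b Ha Hb)).
  lra.
Qed.

Lemma abs_RInt_cadlag_le a b : c <= a <= M -> c <= b <= M -> Rabs (RInt X a b) <= B * Rabs (b - a).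
Proof.
  intros Ha Hb. destruct (Rle_dec a b).
  - rewrite (Rabs_right (b - a)), Rmult_comm by lra.
    apply abs_RInt_le_const; [lra | apply ex_RInt_cadlag; auto | intros; apply HB; lra].
  - rewrite RInt_swapR, Rabs_Ropp, (Rabs_left (b - a)) by (lra || apply ex_RInt_cadlag; lra).
    replace (- (b - a)) with (a - b) by ring. rewrite Rmult_comm.
    apply abs_RInt_le_const; [lra | apply ex_RInt_cadlag; auto | intros; apply HB; lra].
Qed.

Lemma RInt_cadlag_lipschitz x y : c <= x <= M -> c <= y <= M ->
  Rabs (RInt X c x - RInt X c y) <= B * Rabs (x - y).
Proof. intros. rewrite <- RInt_cadlag_Chasles by auto. now apply abs_RInt_cadlag_le. Qed.

Lemma RInt_cadlag_shift_lipschitz a b x y : c <= a + x <= M -> c <= b + x <= M ->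
  c <= a + y <= M -> c <= b + y <= M ->
  Rabs (RInt X (a + x) (b + x) - RInt X (a + y) (b + y)) <= 2 * B * Rabs (x - y).
Proof.
  intros H1 H2 H3 H4.
  rewrite (RInt_cadlag_Chasles (a + x)), (RInt_cadlag_Chasles (a + y)) by auto.
  pose proof (RInt_cadlag_lipschitz (b + x) (b + y) H2 H4).
  pose proof (RInt_cadlag_lipschitz (a + x) (a + y) H1 H3).
  replace (b + x - (b + y)) with (x - y) in * by ring.
  replace (a + x - (a + y)) with (x - y) in * by ring.
  match goal with |- Rabs ?d <= _ => replace d with
    ((RInt X c (b + x) - RInt X c (b + y)) - (RInt X c (a + x) - RInt X c (a + y))) by ring end.
  eapply Rle_trans; [apply Rabs_triang|]. rewrite Rabs_Ropp. lra.
Qed.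

Lemma RInt_average_close v h e : h <> 0 -> c <= v <= M -> c <= v + h <= M ->
  (forall y, Rmin v (v + h) <= y <= Rmax v (v + h) -> Rabs (X y - X v) <= e) ->
  Rabs (RInt X v (v + h) / h - X v) <= e.
Proof.
  intros Hh Hv Hvh H.
  assert (Hex : ex_RInt (fun y => X y - X v) v (v + h)).
  { apply (ex_RInt_minus X (fun _ => X v)); [apply ex_RInt_cadlag; auto | apply ex_RInt_const]. }
  replace (RInt X v (v + h) / h - X v) with (RInt (fun y => X y - X v) v (v + h) / h).
  2:{ rewrite RInt_minusR, RInt_constR;
      [field; auto | apply ex_RInt_cadlag; auto | apply ex_RInt_const]. }
  unfold Rdiv. rewrite Rabs_mult, Rabs_inv.
  assert (0 < Rabs h) by (apply Rabs_pos_lt; auto).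
  apply (Rmult_le_reg_r (Rabs h)); auto. rewrite Rmult_assoc, Rinv_l, Rmult_1_r by lra.
  destruct (Rle_dec 0 h).
  - rewrite (Rabs_right h), Rmult_comm by lra. replace h with (v + h - v) at 2 by ring.
    apply abs_RInt_le_const; [lra | exact Hex|]. intros y Hy. apply H.
    rewrite Rmin_left, Rmax_right by lra. lra.
  - rewrite RInt_swapR, Rabs_Ropp, (Rabs_left h), Rmult_comm by (lra || now apply ex_RInt_swap).
    replace (- h) with (v - (v + h)) by ring.
    apply abs_RInt_le_const; [lra | now apply ex_RInt_swap|]. intros y Hy. apply H.
    rewrite Rmin_right, Rmax_left by lra. lra.
Qed.

End Primitive.

(** * Weighted delay integrals *)

Fixpoint near_count (P : list R) (t r u : R) : R :=
  match P with
  | nil => 0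
  | x :: P' => indicator (x - 2 * r - t) (x + 2 * r - t) u + near_count P' t r u
  end.

Lemma near_count_nonneg P t r u : 0 <= near_count P t r u.
Proof.
  induction P as [|x P IH]; simpl; [lra|].
  pose proof (indicator_bounds (x - 2 * r - t) (x + 2 * r - t) u). lra.
Qed.

Lemma near_count_ge1 P t r u x : 0 < r -> In x P -> Rabs (x - (t + u)) <= r ->
  1 <= near_count P t r u.
Proof.
  intros Hr. induction P as [|y P IH]; simpl; [tauto|]. intros [-> | H] Hx.
  - pose proof (near_count_nonneg P t r u). apply Rabs_le_between in Hx. unfold indicator.
    destruct (Rle_dec (x - 2 * r - t) u); [|lra]. destruct (Rlt_dec u (x + 2 * r - t)); lra.
  - pose proof (indicator_bounds (y - 2 * r - t) (y + 2 * r - t) u). specialize (IH H Hx). lra.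
Qed.

Lemma cadlag_near_count P t r a b : cadlag (near_count P t r) a b.
Proof.
  induction P; simpl; [apply cadlag_const | apply cadlag_plus; auto; apply cadlag_indicator].
Qed.

Section Weight.
Variables (w : R -> R) (p W : R).
Hypothesis Hp : 0 <= p.
Hypothesis Hw : cadlag w (-p) 0.
Hypothesis HW : forall u, -p <= u <= 0 -> 0 <= w u <= W.

Lemma weight_bound_nonneg : 0 <= W.
Proof. pose proof (HW 0 ltac:(lra)). lra. Qed.

Lemma ex_RInt_weighted D : cadlag D (-p) 0 -> ex_RInt (fun u => w u * D u) (-p) 0.
Proof. intros HD. apply cadlag_ex_RInt; [lra | now apply cadlag_mult]. Qed.

Lemma RInt_weighted_near_count_le P t r : 0 < r ->
  RInt (fun u => w u * near_count P t r u) (-p) 0 <= W * (4 * r) * INR (length P).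
Proof.
  intros Hr. induction P as [|x P IH]; simpl.
  - rewrite (RInt_extR _ (fun _ => 0)), RInt_constR; [lra | intros; ring].
  - set (al := x - 2 * r - t). set (be := x + 2 * r - t).
    rewrite (RInt_extR _ (fun u => w u * indicator al be u + w u * near_count P t r u))
      by (intros; ring).
    rewrite RInt_plusR, RInt_mult_indicator;
      [| lra | unfold al, be; lra | exact Hw
       | apply ex_RInt_weighted, cadlag_indicator | apply ex_RInt_weighted, cadlag_near_count].
    pose proof (clamp_bounds (-p) 0 al ltac:(lra)). pose proof (clamp_bounds (-p) 0 be ltac:(lra)).
    pose proof (clamp_diff (-p) 0 al be ltac:(lra) ltac:(unfold al, be; lra)).
    assert (RInt w (clamp (-p) 0 al) (clamp (-p) 0 be) <= W * (4 * r)).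
    { eapply Rle_trans.
      - apply RInt_le_const; [lra | |intros u Hu; apply (HW u); lra].
        apply cadlag_ex_RInt; [lra | eapply cadlag_subinterval; [| |apply Hw]; lra].
      - pose proof weight_bound_nonneg. apply Rmult_le_compat_l; unfold al, be in *; lra. }
    destruct (length P); simpl in *; [|destruct n]; lra.
Qed.

Lemma abs_weighted_le_near_count (D : R -> R) t r e K (P : list R) u :
  0 < r -> 0 <= e -> -p < u < 0 -> Rabs (D u) <= K ->
  ((forall x, In x P -> r < Rabs (x - (t + u))) -> Rabs (D u) <= e) ->
  Rabs (w u * D u) <= w u * e + K * (w u * near_count P t r u).
Proof.
  intros Hr He Hu HDK HDe. rewrite Rabs_mult.
  pose proof (HW u ltac:(lra)). rewrite (Rabs_right (w u)) by lra.
  pose proof (near_count_nonneg P t r u). pose proof (Rabs_pos (D u)).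
  assert (0 <= K) by lra.
  destruct (classic (forall x, In x P -> r < Rabs (x - (t + u)))) as [Hall | Hn].
  - specialize (HDe Hall).
    assert (0 <= K * (w u * near_count P t r u))
      by (apply Rmult_le_pos; [|apply Rmult_le_pos]; lra).
    assert (w u * Rabs (D u) <= w u * e) by (apply Rmult_le_compat_l; lra). lra.
  - apply not_all_ex_not in Hn. destruct Hn as [x Hx].
    apply imply_to_and in Hx. destruct Hx as [HxP Hx]. apply Rnot_lt_le in Hx.
    pose proof (near_count_ge1 P t r u x Hr HxP Hx).
    assert (w u * Rabs (D u) <= w u * K) by (apply Rmult_le_compat_l; lra).
    replace (w u * K) with (K * (w u * 1)) in * by ring.
    assert (K * (w u * 1) <= K * (w u * near_count P t r u))
      by (apply Rmult_le_compat_l, Rmult_le_compat_l; lra).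
    assert (0 <= w u * e) by (apply Rmult_le_pos; lra). lra.
Qed.

(* Where [D] may be large, i.e. within [r] of the finite set [P], the weight has mass at most
   [4 r] per point of [P]. *)
Lemma abs_RInt_weighted_le (D : R -> R) t r e K (P : list R) :
  0 < r -> 0 <= e -> 0 <= K -> cadlag D (-p) 0 ->
  (forall u, -p < u < 0 -> Rabs (D u) <= K) ->
  (forall u, -p < u < 0 -> (forall x, In x P -> r < Rabs (x - (t + u))) -> Rabs (D u) <= e) ->
  Rabs (RInt (fun u => w u * D u) (-p) 0) <= W * p * e + K * (W * (4 * r) * INR (length P)).
Proof.
  intros Hr He HK HD HDK HDe.
  set (g := fun u => w u * e + K * (w u * near_count P t r u)).
  assert (Hg : cadlag g (-p) 0).
  { apply cadlag_plus; [apply cadlag_mult; auto; apply cadlag_const|].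
    apply cadlag_scal, cadlag_mult; auto; apply cadlag_near_count. }
  apply Rle_trans with (RInt g (-p) 0).
  { apply abs_RInt_le_fun; [lra | apply ex_RInt_weighted; exact HD | |].
    - apply cadlag_ex_RInt; [lra | exact Hg].
    - intros u Hu. apply (abs_weighted_le_near_count D t r e K P u); auto. }
  assert (HN : ex_RInt (fun u => w u * near_count P t r u) (-p) 0)
    by apply ex_RInt_weighted, cadlag_near_count.
  unfold g. rewrite RInt_plusR, (RInt_scalR _ _ _ _ HN);
    [| apply ex_RInt_weighted, cadlag_const
     | now apply (ex_RInt_scal (V := R_CompleteNormedModule))].
  pose proof (RInt_weighted_near_count_le P t r Hr).
  assert (RInt (fun u => w u * e) (-p) 0 <= W * p * e).
  { eapply Rle_trans.
    - apply RInt_le_const with (M := W * e); [lra | apply ex_RInt_weighted, cadlag_const|].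
      intros u Hu. apply Rmult_le_compat_r; auto. apply HW; lra.
    - lra. }
  assert (K * RInt (fun u => w u * near_count P t r u) (-p) 0 <= K * (W * (4 * r) * INR (length P)))
    by (apply Rmult_le_compat_l; auto).
  lra.
Qed.

End Weight.

Lemma mult_div_double_succ_lt Q e : 0 <= Q -> 0 < e -> Q * (e / (2 * (Q + 1))) < e / 2.
Proof.
  intros HQ He. apply Rmult_lt_reg_r with (2 * (Q + 1)); [lra|].
  replace (Q * (e / (2 * (Q + 1))) * (2 * (Q + 1))) with (Q * e) by (field; lra). nra.
Qed.

Definition weighted_delay (w X : R -> R) (p t : R) : R :=
  RInt (fun u => w u * X (t + u)) (-p) 0.

Definition integrated_weighted_delay (w X : R -> R) (p t : R) : R :=
  RInt (fun u => w u * RInt X u (t + u)) (-p) 0.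

Section Delay.
Variables (X w : R -> R) (c M p W : R).
Hypothesis HX : cadlag X c M.
Hypothesis Hp : 0 <= p.
Hypothesis Hcp : c <= - p.
Hypothesis HM : 0 <= M.
Hypothesis Hw : cadlag w (-p) 0.
Hypothesis HW : forall u, -p <= u <= 0 -> 0 <= w u <= W.

(* Uniform in the shift [t]: [D u] is controlled by the oscillation of [X] on the [r]-ball
   around [t + u], which is small except near finitely many large jumps of [X]. *)
Lemma RInt_weighted_oscillation_small K e : 0 <= K -> 0 < e ->
  exists d, 0 < d /\ forall t r D, c <= t - p -> t <= M -> 0 < r < d -> cadlag D (-p) 0 ->
    (forall u, -p < u < 0 -> Rabs (D u) <= K) ->
    (forall u k, -p < u < 0 ->
       (forall y, c <= y <= M -> Rabs (y - (t + u)) <= r -> Rabs (X y - X (t + u)) <= k) ->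
       Rabs (D u) <= k) ->
    Rabs (RInt (fun u => w u * D u) (-p) 0) < e.
Proof.
  intros HK He. pose proof (weight_bound_nonneg w p W Hp HW) as HW0.
  set (e' := e / (2 * (W * p + 1))).
  assert (He' : 0 < e') by (unfold e'; apply Rdiv_lt_0_compat; nra).
  destruct (cadlag_small_oscillation X c M e' ltac:(lra) He' HX) as [P HP].
  set (Q := K * W * 4 * INR (length P)).
  assert (HQ : 0 <= Q) by (unfold Q; pose proof (pos_INR (length P));
                           repeat apply Rmult_le_pos; lra).
  exists (e / (2 * (Q + 1))). split; [apply Rdiv_lt_0_compat; lra|].
  intros t r D Ht1 Ht2 Hr HD HDK Hosc.
  eapply Rle_lt_trans.
  - apply (abs_RInt_weighted_le w p W Hp Hw HW D t r e' K P); try lra; auto.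
    intros u Hu Hall. apply Hosc; auto. intros y Hy Hyr. apply HP; try lra.
    intros x Hx Hin. specialize (Hall x Hx). apply Rabs_le_between in Hyr.
    assert (Rabs (x - (t + u)) <= r); [|lra].
    apply Rabs_le. unfold Rmin, Rmax in Hin. destruct Rle_dec; lra.
  - assert (W * p * e' < e / 2) by (unfold e'; apply mult_div_double_succ_lt; nra).
    assert (K * (W * (4 * r) * INR (length P)) <= Q * (e / (2 * (Q + 1)))).
    { replace (K * (W * (4 * r) * INR (length P))) with (Q * r) by (unfold Q; ring).
      apply Rmult_le_compat_l; lra. }
    pose proof (mult_div_double_succ_lt Q e HQ He). lra.
Qed.

Lemma cadlag_delayed s : c <= s - p -> s <= M -> cadlag (fun u => X (s + u)) (-p) 0.
Proof. intros. eapply cadlag_subinterval; [| |apply (cadlag_shift X c M s HX)]; lra. Qed.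

Lemma weighted_delay_continuous t : c <= t - p -> t <= M ->
  filterlim (weighted_delay w X p) (within (fun s => c <= s - p /\ s <= M) (locally t))
    (locally (weighted_delay w X p t)).
Proof.
  intros Ht1 Ht2. destruct (cadlag_bounded X c M ltac:(lra) HX) as [B [HB0 HB]].
  apply filterlim_within_eps. intros e He.
  destruct (RInt_weighted_oscillation_small (2 * B) e ltac:(lra) He) as [d [Hd Hsmall]].
  exists d. split; auto. intros s [Hs1 Hs2] Hsd.
  destruct (Req_dec s t) as [-> | Nst]; [rewrite Rminus_diag, Rabs_R0; lra|].
  unfold weighted_delay. rewrite <- RInt_minusR by
    (apply ex_RInt_weighted; auto; apply cadlag_delayed; lra).
  rewrite (RInt_extR _ (fun u => w u * (X (s + u) - X (t + u)))) by (intros; ring).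
  apply (Hsmall t (Rabs (s - t))); auto.
  - split; [apply Rabs_pos_lt; lra | exact Hsd].
  - apply cadlag_minus; apply cadlag_delayed; lra.
  - intros u Hu. eapply Rle_trans; [apply Rabs_triang|]. rewrite Rabs_Ropp.
    pose proof (HB (s + u) ltac:(lra)). pose proof (HB (t + u) ltac:(lra)). lra.
  - intros u k Hu Hk. apply Hk; [lra|]. right. f_equal. ring.
Qed.

Lemma cadlag_weighted_window s B : 0 <= s <= M -> (forall x, c <= x <= M -> Rabs (X x) <= B) ->
  cadlag (fun u => w u * RInt X u (s + u)) (-p) 0.
Proof.
  intros Hs HB. apply cadlag_mult; auto.
  assert (HB0 : 0 <= B) by (pose proof (HB M ltac:(lra)); pose proof (Rabs_pos (X M)); lra).
  apply cadlag_lipschitz with (L := 2 * B); [lra|]. intros x y Hx Hy.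
  rewrite <- (Rplus_0_l x) at 1. rewrite <- (Rplus_0_l y) at 1.
  apply (RInt_cadlag_shift_lipschitz X c M B HX HB); lra.
Qed.

Lemma integrated_weighted_delay_quotient t h : h <> 0 -> 0 <= t <= M -> 0 <= t + h <= M ->
  (integrated_weighted_delay w X p (t + h) - integrated_weighted_delay w X p t) / h
    - weighted_delay w X p t
  = RInt (fun u => w u * (RInt X (t + u) (t + u + h) / h - X (t + u))) (-p) 0.
Proof.
  intros Hh Ht Hth. destruct (cadlag_bounded X c M ltac:(lra) HX) as [B [HB0 HB]].
  set (a := fun u => w u * RInt X u (t + h + u)).
  set (b := fun u => w u * RInt X u (t + u)).
  set (g := fun u => w u * X (t + u)).
  assert (Ha : ex_RInt a (-p) 0) by
    (apply cadlag_ex_RInt; [lra | now apply (cadlag_weighted_window (t + h) B)]).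
  assert (Hb : ex_RInt b (-p) 0) by
    (apply cadlag_ex_RInt; [lra | now apply (cadlag_weighted_window t B)]).
  assert (Hg : ex_RInt g (-p) 0) by (apply ex_RInt_weighted; auto; apply cadlag_delayed; lra).
  assert (Hab : ex_RInt (fun u => a u - b u) (-p) 0) by
    now apply (ex_RInt_minus (V := R_CompleteNormedModule)).
  rewrite (RInt_extR _ (fun u => / h * (a u - b u) - g u)).
  - rewrite RInt_minusR, RInt_scalR, RInt_minusR; auto.
    + unfold integrated_weighted_delay, weighted_delay, a, b, g. field. auto.
    + now apply (ex_RInt_scal (V := R_CompleteNormedModule)).
  - intros u Hu. rewrite Rmin_left, Rmax_right in Hu by lra. unfold a, b, g.
    rewrite (RInt_cadlag_Chasles X c M HX (t + u)), (RInt_cadlag_Chasles X c M HX u (t + h + u)),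
      (RInt_cadlag_Chasles X c M HX u (t + u)) by lra.
    replace (t + u + h) with (t + h + u) by ring. field. auto.
Qed.

Lemma integrated_weighted_delay_derivative t : 0 <= t <= M ->
  filterlim (fun h => (integrated_weighted_delay w X p (t + h)
                       - integrated_weighted_delay w X p t) / h)
    (within (fun h => h <> 0 /\ 0 <= t + h <= M) (locally 0)) (locally (weighted_delay w X p t)).
Proof.
  intros Ht. destruct (cadlag_bounded X c M ltac:(lra) HX) as [B [HB0 HB]].
  apply filterlim_within_eps. intros e He.
  destruct (RInt_weighted_oscillation_small (2 * B) e ltac:(lra) He) as [d [Hd Hsmall]].
  exists d. split; auto. intros h [Hh0 Hth] Hhd. rewrite Rminus_0_r in Hhd.
  assert (Hr : 0 < Rabs h) by (apply Rabs_pos_lt; lra).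
  rewrite integrated_weighted_delay_quotient by (auto; lra).
  apply (Hsmall t (Rabs h)); auto; try lra.
  - apply cadlag_minus; [|apply cadlag_delayed; lra].
    apply cadlag_lipschitz with (L := 2 * B / Rabs h); [apply Rdiv_le_0_compat; lra|].
    intros x y Hx Hy. unfold Rdiv. rewrite <- Rmult_minus_distr_r, Rabs_mult, Rabs_inv.
    replace (t + x + h) with (t + h + x) by ring. replace (t + y + h) with (t + h + y) by ring.
    apply Rle_trans with (2 * B * Rabs (x - y) * / Rabs h); [|right; ring].
    apply Rmult_le_compat_r; [left; apply Rinv_0_lt_compat; lra|].
    apply (RInt_cadlag_shift_lipschitz X c M B HX HB); lra.
  - intros u Hu. eapply Rle_trans; [apply Rabs_triang|]. rewrite Rabs_Ropp.
    pose proof (HB (t + u) ltac:(lra)).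
    assert (Rabs (RInt X (t + u) (t + u + h) / h) <= B); [|lra].
    unfold Rdiv. rewrite Rabs_mult, Rabs_inv.
    pose proof (abs_RInt_cadlag_le X c M B HX HB (t + u) (t + u + h) ltac:(lra) ltac:(lra)).
    replace (t + u + h - (t + u)) with h in * by ring.
    apply (Rmult_le_reg_r (Rabs h)); auto. rewrite Rmult_assoc, Rinv_l; lra.
  - intros u k Hu Hk. apply (RInt_average_close X c M HX); auto; try lra.
    intros y Hy. apply Hk; unfold Rmin, Rmax in Hy; destruct Rle_dec; try lra;
      apply Rabs_le; destruct (Rle_dec 0 h); rewrite ?Rabs_right, ?Rabs_left by lra; lra.
Qed.

End Delay.

Lemma sum_n_extR (a b : nat -> R) N : (forall k, a k = b k) -> sum_n a N = sum_n b N.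
Proof. apply sum_n_ext. Qed.

Lemma sum_n_minusR (u v : nat -> R) n :
  sum_n (fun k => u k - v k) n = sum_n u n - sum_n v n.
Proof.
  induction n as [|n IH]; [now rewrite !sum_O|].
  rewrite !sum_Sn, IH. simpl. unfold plus; simpl. ring.
Qed.

Lemma sum_n_scalR (a : R) (u : nat -> R) n : sum_n (fun k => a * u k) n = a * sum_n u n.
Proof. apply (sum_n_mult_l a u n). Qed.

Lemma sum_n_zero (a : nat -> R) N : (forall k, (k <= N)%nat -> a k = 0) -> sum_n a N = 0.
Proof.
  induction N as [|N IH]; intros H; [rewrite sum_O; apply H; lia|].
  rewrite sum_Sn, IH, H; [apply Rplus_0_r | lia | intros; apply H; lia].
Qed.

Lemma sum_n_single (a : nat -> R) N m : (m <= N)%nat ->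
  (forall k, (k <= N)%nat -> k <> m -> a k = 0) -> sum_n a N = a m.
Proof.
  induction N as [|N IH]; intros Hm H.
  - rewrite sum_O. now replace m with 0%nat by lia.
  - rewrite sum_Sn. destruct (Nat.eq_dec m (S N)) as [-> | Hne].
    + rewrite sum_n_zero; [apply Rplus_0_l | intros; apply H; lia].
    + rewrite IH, (H (S N)); [apply Rplus_0_r | lia | auto | lia | intros; apply H; lia].
Qed.

Lemma Series_finite (a : nat -> R) N : (forall k, (N < k)%nat -> a k = 0) -> Series a = sum_n a N.
Proof.
  intros H. unfold Series. rewrite (Lim_seq_ext_loc _ (fun _ => sum_n a N)).
  - now rewrite Lim_seq_const.
  - exists N. intros n Hn. induction Hn as [|n Hn IH]; [reflexivity|].
    rewrite sum_Sn, IH, H by lia. apply Rplus_0_r.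
Qed.

Lemma Series_zero (a : nat -> R) : (forall k, a k = 0) -> Series a = 0.
Proof. intros H. rewrite (Series_finite a 0); [rewrite sum_O; apply H | intros; apply H]. Qed.

Section Increasing.
Variable T : nat -> R.
Hypothesis HT : forall n, T n < T (S n).

Lemma incr_lt n m : (n < m)%nat -> T n < T m.
Proof. intros H. induction H; [apply HT | specialize (HT m); lra]. Qed.

Lemma incr_le n m : (n <= m)%nat -> T n <= T m.
Proof. intros H. destruct (Nat.eq_dec n m) as [-> | ]; [lra | left; apply incr_lt; lia]. Qed.

Lemma incr_inj n m : T n = T m -> n = m.
Proof.
  intros E. destruct (Nat.lt_trichotomy n m) as [H | [H | H]]; auto;
    pose proof (incr_lt _ _ H); lra.
Qed.

Lemma incr_gap n k : ~ (T n < T k < T (S n)).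
Proof.
  intros [H1 H2]. destruct (Compare_dec.le_lt_dec k n) as [l | l].
  - pose proof (incr_le k n l). lra.
  - pose proof (incr_le (S n) k l). lra.
Qed.

Hypothesis HTu : forall M, exists n, M < T n.

Lemma incr_eventually_gt M : exists N, forall k, (N < k)%nat -> M < T k.
Proof. destruct (HTu M) as [n Hn]. exists n. intros k Hk. pose proof (incr_lt _ _ Hk). lra. Qed.

Lemma incr_left_gap t : exists d, 0 < d /\ forall k, ~ (t - d < T k < t).
Proof.
  destruct (incr_eventually_gt t) as [N HN].
  assert (H : exists d, 0 < d /\ forall k, (k <= N)%nat -> ~ (t - d < T k < t)).
  { clear HN. induction N as [|N [d [Hd H]]].
    - exists (if Rlt_dec (T 0%nat) t then t - T 0%nat else 1).
      destruct Rlt_dec; split; try lra; intros k Hk; replace k with 0%nat by lia; lra.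
    - exists (if Rlt_dec (T (S N)) t then Rmin d (t - T (S N)) else d).
      pose proof (Rmin_l d (t - T (S N))). pose proof (Rmin_r d (t - T (S N))).
      destruct Rlt_dec; (split; [try apply Rmin_pos; lra|]); intros k Hk;
        (destruct (Nat.eq_dec k (S N)) as [-> | ]; [lra|]); specialize (H k ltac:(lia)); lra. }
  destruct H as [d [Hd H]]. exists d. split; auto. intros k.
  destruct (Compare_dec.le_lt_dec k N) as [l | l]; [now apply H | specialize (HN k l); lra].
Qed.

End Increasing.

(* The right and left derivatives of [b |-> RInt f (-q) (clamp (-q) 0 b)]; they differ only at
   [b = -q] and [b = 0]. *)
Definition density_right (f : R -> R) (q b : R) : R :=
  if Rlt_dec (-q) b then if Rle_dec b 0 then f b else 0 else 0.

Definition density_left (f : R -> R) (q b : R) : R :=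
  if Rle_dec (-q) b then if Rlt_dec b 0 then f b else 0 else 0.

Section ClampedPrimitive.
Variables (f : R -> R) (q : R).
Hypothesis Hq : 0 <= q.
Hypothesis Hf : forall u, -q <= u <= 0 ->
  filterlim f (within (fun v => -q <= v <= 0) (locally u)) (locally (f u)).

Lemma cadlag_continuous_on : cadlag f (-q) 0.
Proof. now apply cadlag_of_continuous_on. Qed.

Lemma ex_RInt_clamp x y : ex_RInt f (clamp (-q) 0 x) (clamp (-q) 0 y).
Proof.
  pose proof (clamp_bounds (-q) 0 x). pose proof (clamp_bounds (-q) 0 y).
  apply (ex_RInt_cadlag f (-q) 0 cadlag_continuous_on); lra.
Qed.

Lemma RInt_average_continuous b e : -q <= b <= 0 -> 0 < e ->
  exists d, 0 < d /\ forall h, h <> 0 -> Rabs h < d -> -q <= b - h <= 0 ->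
    Rabs (RInt f (b - h) b / h - f b) < e.
Proof.
  intros Hb He.
  destruct (proj1 (filterlim_within_eps _ _ _ _) (Hf b Hb) (e / 2) ltac:(lra)) as [d [Hd K]].
  exists d. split; auto. intros h Hh0 Hh Hbh.
  rewrite RInt_swapR by (apply (ex_RInt_cadlag f (-q) 0 cadlag_continuous_on); lra).
  replace (- RInt f b (b - h) / h) with (RInt f b (b + - h) / - h)
    by (replace (b + - h) with (b - h) by ring; field; lra).
  eapply Rle_lt_trans; [apply (RInt_average_close f (-q) 0 cadlag_continuous_on b (- h) (e / 2));
                        try lra|lra].
  intros y Hy. apply Rabs_lt_between in Hh. unfold Rmin, Rmax in Hy.
  left. apply K; [|apply Rabs_lt_between']; destruct Rle_dec; lra.
Qed.

Lemma RInt_clamp_quotient_right b :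
  filterlim (fun h => RInt f (clamp (-q) 0 (b - h)) (clamp (-q) 0 b) / h) (at_right 0)
    (locally (density_right f q b)).
Proof.
  unfold density_right.
  destruct (Rlt_dec (-q) b) as [Hb1 | Hb1]; [destruct (Rle_dec b 0) as [Hb2 | Hb2]|].
  - apply filterlim_within_eps. intros e He.
    destruct (RInt_average_continuous b e ltac:(lra) He) as [d [Hd K]].
    exists (Rmin d (b + q)). pose proof (Rmin_l d (b + q)). pose proof (Rmin_r d (b + q)).
    split; [apply Rmin_pos; lra|]. intros h Hh Hhd. rewrite Rminus_0_r, Rabs_right in Hhd by lra.
    rewrite !clamp_id by lra. apply K; try rewrite Rabs_right; lra.
  - apply filterlim_locally_constant; [apply at_right_proper_filter|].
    apply (within_locally_intro _ _ 0 b); [lra|]. intros h Hh Hhd.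
    rewrite Rminus_0_r, Rabs_right in Hhd by lra.
    rewrite !clamp_le, RInt_pointR by lra. apply Rmult_0_l.
  - apply filterlim_locally_constant; [apply at_right_proper_filter|].
    apply (within_locally_intro _ _ 0 1); [lra|]. intros h Hh _.
    rewrite !clamp_ge, RInt_pointR by lra. apply Rmult_0_l.
Qed.

Lemma RInt_clamp_quotient_left b :
  filterlim (fun h => RInt f (clamp (-q) 0 (b - h)) (clamp (-q) 0 b) / h) (at_left 0)
    (locally (density_left f q b)).
Proof.
  unfold density_left.
  destruct (Rle_dec (-q) b) as [Hb1 | Hb1]; [destruct (Rlt_dec b 0) as [Hb2 | Hb2]|].
  - apply filterlim_within_eps. intros e He.
    destruct (RInt_average_continuous b e ltac:(lra) He) as [d [Hd K]].
    exists (Rmin d (- b)). pose proof (Rmin_l d (- b)). pose proof (Rmin_r d (- b)).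
    split; [apply Rmin_pos; lra|]. intros h Hh Hhd. rewrite Rminus_0_r, Rabs_left in Hhd by lra.
    rewrite !clamp_id by lra. apply K; try rewrite Rabs_left; lra.
  - apply filterlim_locally_constant; [apply at_left_proper_filter|].
    apply (within_locally_intro _ _ 0 1); [lra|]. intros h Hh _.
    rewrite !clamp_le, RInt_pointR by lra. apply Rmult_0_l.
  - apply filterlim_locally_constant; [apply at_left_proper_filter|].
    apply (within_locally_intro _ _ 0 (- q - b)); [lra|]. intros h Hh Hhd.
    rewrite Rminus_0_r, Rabs_left in Hhd by lra.
    rewrite !clamp_ge, RInt_pointR by lra. apply Rmult_0_l.
Qed.

End ClampedPrimitive.

Lemma density_left_right_eq (f : R -> R) q b : f (- q) = 0 -> b <> 0 ->
  density_left f q b = density_right f q b.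
Proof.
  intros Hf Hb. unfold density_left, density_right.
  destruct (Rle_dec (-q) b), (Rlt_dec b 0), (Rlt_dec (-q) b), (Rle_dec b 0); try lra;
    try reflexivity; replace b with (-q) by lra; now rewrite Hf.
Qed.

Lemma density_right_continuous (f : R -> R) q b : 0 <= q -> f (- q) = 0 -> b <= 0 ->
  (forall u, -q <= u <= 0 ->
     filterlim f (within (fun v => -q <= v <= 0) (locally u)) (locally (f u))) ->
  filterlim (density_right f q) (within (fun v => v <= 0) (locally b))
    (locally (density_right f q b)).
Proof.
  intros Hq Hf0 Hb Hf. apply filterlim_within_eps. intros e He.
  destruct (Rlt_dec b (-q)) as [Hbq | Hbq].
  - exists (- q - b). split; [lra|]. intros v Hv Hvb. apply Rabs_lt_between' in Hvb.
    unfold density_right. do 2 (destruct Rlt_dec; try lra). rewrite Rminus_0_r, Rabs_R0. lra.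
  - destruct (proj1 (filterlim_within_eps _ _ _ _) (Hf b ltac:(lra)) e He) as [d [Hd K]].
    destruct (Rlt_dec (- q) b) as [Hb' | Hb'].
    + exists (Rmin d (b + q)). pose proof (Rmin_l d (b + q)). pose proof (Rmin_r d (b + q)).
      split; [apply Rmin_pos; lra|]. intros v Hv Hvb. simpl in Hv.
      apply Rabs_lt_between' in Hvb as Hv'. unfold density_right.
      do 2 (destruct Rlt_dec; try lra). do 2 (destruct Rle_dec; try lra). apply K; lra.
    + replace b with (- q) in * by lra. exists d. split; auto. intros v Hv Hvb. simpl in Hv.
      unfold density_right at 2. destruct (Rlt_dec (- q) (- q)); [lra|].
      rewrite <- Hf0. unfold density_right.
      destruct (Rlt_dec (- q) v); [destruct (Rle_dec v 0); [apply K; lra | lra]|].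
      rewrite Hf0, Rminus_0_r, Rabs_R0. lra.
Qed.

Lemma linear_ode_solution (X : R -> R) a b eta cmu : 0 < cmu -> a < b ->
  filterlim X (at_right a) (locally (X a)) ->
  (forall s, a < s < b -> is_derive X s (eta - cmu * X s)) ->
  forall t, a < t < b -> X t = eta / cmu + (X a - eta / cmu) * exp (- cmu * (t - a)).
Proof.
  intros Hc Hab HXa HD t Ht.
  set (E := fun s => exp (cmu * (s - a))).
  set (Y := fun s => (X s - eta / cmu) * E s).
  assert (HE : forall s, is_derive E s (cmu * E s)).
  { intros s. unfold E. auto_derive; [auto | now rewrite Rmult_1_r]. }
  assert (HY : forall s, a < s < b -> is_derive Y s 0).
  { intros s Hs. unfold Y. evar (l : R). replace 0 with l; unfold l.
    - apply (is_derive_mult (fun s => X s - eta / cmu)); [|apply HE | intros; apply Rmult_comm].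
      apply (is_derive_minus X (fun _ => eta / cmu)); [now apply HD | apply is_derive_const].
    - simpl. unfold plus, mult, minus, opp, zero; simpl. unfold plus, opp; simpl. field. lra. }
  assert (Hconst : forall s1 s2, a < s1 <= s2 -> s2 < b -> Y s1 = Y s2).
  { intros s1 s2 H1 H2.
    assert (HI : is_RInt (fun _ => 0) s1 s2 (minus (Y s2) (Y s1))).
    { apply (is_RInt_derive Y (fun _ => 0)); [|intros; apply continuous_const].
      intros x Hx. rewrite Rmin_left, Rmax_right in Hx by lra. apply HY. lra. }
    apply (is_RInt_unique (V := R_CompleteNormedModule)) in HI. rewrite RInt_constR in HI.
    unfold minus, plus, opp in HI. simpl in HI. lra. }
  assert (HlimY : filterlim Y (at_right a) (locally ((X a - eta / cmu) * E a))).
  { apply lim_mult; [apply lim_minus; [exact HXa | apply filterlim_const]|].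
    eapply filterlim_filter_le_1; [apply filter_le_within|].
    apply (ex_derive_continuous E a). eexists. apply HE. }
  assert (HlimYt : filterlim Y (at_right a) (locally (Y t))).
  { apply filterlim_locally_constant; [apply at_right_proper_filter|].
    apply (within_locally_intro _ _ a (t - a)); [lra|]. intros y Hy Hya.
    simpl in Hy. apply Rabs_lt_between' in Hya. apply Hconst; lra. }
  pose proof (filterlim_locally_unique _ _ _ HlimY HlimYt) as EY.
  unfold Y, E in EY. rewrite Rminus_diag, Rmult_0_r, exp_0, Rmult_1_r in EY.
  rewrite EY, Rmult_assoc, <- exp_plus.
  replace (cmu * (t - a) + - cmu * (t - a)) with 0 by ring. rewrite exp_0. ring.
Qed.

(** * The variance process between jump times *)

Section Model.
Variables (p q eta cmu cnu : R) (fmu fnu : R -> R) (T J : nat -> R) (X Xm : R -> R).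
Hypothesis Hp : 0 <= p.
Hypothesis Hq : 0 <= q.
Hypothesis Hfmu0 : forall u, - p <= u <= 0 -> 0 <= fmu u.
Hypothesis Hfmu : forall u, - p <= u <= 0 ->
  filterlim fmu (within (fun v => - p <= v <= 0) (locally u)) (locally (fmu u)).
Hypothesis Hfnu : forall u, - q <= u <= 0 ->
  filterlim fnu (within (fun v => - q <= v <= 0) (locally u)) (locally (fnu u)).
Hypothesis HT : forall n, T n < T (S n).
Hypothesis HT0 : - Rmax p q < T 0%nat.
Hypothesis HTu : forall M, exists n, M < T n.
Hypothesis HXr : forall t, - Rmax p q <= t -> filterlim X (at_right t) (locally (X t)).
Hypothesis HXl : forall t, - Rmax p q < t -> left_lim X t (Xm t).
Hypothesis Heq : forall t, 0 < t -> cdgarch_eq p q eta cmu cnu fmu fnu T J X Xm t.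

Let r := Rmax p q.

Lemma cadlag_X M : cadlag X (- r) M.
Proof.
  pose proof (Rmax_l p q). pose proof (Rmax_r p q).
  split; intros x Hx; [apply HXr | exists (Xm x); apply HXl]; unfold r in Hx; lra.
Qed.

Lemma fmu_bounded : exists W, forall u, - p <= u <= 0 -> 0 <= fmu u <= W.
Proof.
  destruct (cadlag_bounded fmu (-p) 0 ltac:(lra) (cadlag_continuous_on fmu p Hfmu)) as [W [_ HW]].
  exists W. intros u Hu. split; [now apply Hfmu0|].
  specialize (HW u Hu). apply Rabs_le_between in HW. lra.
Qed.

Definition jump_mass k := Xm (T k) * J k ^ 2.

Definition jumps_after N M := forall k, (N < k)%nat -> M < T k.

Lemma jumps_after_exists M : exists N, jumps_after N M.
Proof. exact (incr_eventually_gt T HT HTu M). Qed.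

Definition intX t := RInt X 0 t.
Definition nu_term t := RInt (fun u => fnu u * dS_int T J Xm u (t + u)) (- q) 0.
Definition jump_term t := dS_int T J Xm 0 t.

Definition rhs t := X 0 + eta * t
  + (integrated_weighted_delay fmu X p t - cmu * intX t) + (nu_term t + cnu * jump_term t).

Lemma dS_int_empty a : dS_int T J Xm a a = 0.
Proof.
  apply Series_zero. intros k. destruct (Rlt_dec a (T k)); [|reflexivity].
  destruct (Rle_dec (T k) a); [lra | reflexivity].
Qed.

Lemma X_eq_rhs t : 0 <= t -> X t = rhs t.
Proof.
  intros Ht. destruct (Req_dec t 0) as [-> | Nt]; [|now apply Heq; lra].
  unfold rhs, integrated_weighted_delay, intX, nu_term, jump_term.
  rewrite (RInt_extR _ (fun _ => 0)) by (intros; rewrite Rplus_0_l, RInt_pointR; ring).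
  rewrite (RInt_extR (fun u => fnu u * _) (fun _ => 0))
    by (intros; rewrite Rplus_0_l, dS_int_empty; ring).
  rewrite !RInt_constR, RInt_pointR, dS_int_empty. ring.
Qed.

Lemma dS_int_finite N M x y : jumps_after N M -> y <= M ->
  dS_int T J Xm x y =
  sum_n (fun k => if Rlt_dec x (T k) then if Rle_dec (T k) y then jump_mass k else 0 else 0) N.
Proof.
  intros HN Hy. apply Series_finite. intros k Hk. specialize (HN k Hk).
  destruct (Rlt_dec x (T k)); [|reflexivity]. destruct (Rle_dec (T k) y); [lra | reflexivity].
Qed.

Lemma jump_term_constant t s : 0 <= t <= s -> (forall k, ~ (t < T k <= s)) ->
  jump_term s = jump_term t.
Proof.
  intros Hts H. apply Series_ext. intros k. specialize (H k).
  destruct (Rlt_dec 0 (T k)); [|reflexivity].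
  destruct (Rle_dec (T k) s), (Rle_dec (T k) t); auto; lra.
Qed.

Lemma nu_term_finite N M s : jumps_after N M -> 0 <= s <= M ->
  nu_term s =
  sum_n (fun k => jump_mass k * RInt fnu (clamp (-q) 0 (T k - s)) (clamp (-q) 0 (T k))) N.
Proof.
  intros HN Hs. pose proof (cadlag_continuous_on fnu q Hfnu) as Hc.
  assert (Hi : forall k, cadlag (fun u => fnu u * indicator (T k - s) (T k) u) (-q) 0)
    by (intros; apply cadlag_mult; [exact Hc | apply cadlag_indicator]).
  unfold nu_term.
  rewrite (RInt_extR _ (fun u =>
    sum_n (fun k => jump_mass k * (fnu u * indicator (T k - s) (T k) u)) N)).
  2:{ intros u Hu. rewrite Rmin_left, Rmax_right in Hu by lra.
      rewrite (dS_int_finite N M u (s + u)), <- sum_n_scalR by (auto; lra).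
      apply sum_n_extR. intros k. unfold indicator.
      destruct (Rlt_dec u (T k)), (Rle_dec (T k) (s + u)), (Rle_dec (T k - s) u);
        try destruct (Rlt_dec u (T k)); try lra; ring. }
  rewrite RInt_sum_n.
  2:{ intros k _. apply (ex_RInt_scal (V := R_CompleteNormedModule)), cadlag_ex_RInt;
      [lra | apply Hi]. }
  apply sum_n_extR. intros k. rewrite RInt_scalR, RInt_mult_indicator; auto; try lra.
  apply cadlag_ex_RInt; [lra | apply Hi].
Qed.

Lemma nu_term_quotient N M t h : jumps_after N M -> 0 <= t <= M -> 0 <= t + h <= M -> h <> 0 ->
  (nu_term (t + h) - nu_term t) / h =
  sum_n (fun k => jump_mass k *
    (RInt fnu (clamp (-q) 0 (T k - t - h)) (clamp (-q) 0 (T k - t)) / h)) N.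
Proof.
  intros HN Ht Hth Hh. rewrite (nu_term_finite N M (t + h)), (nu_term_finite N M t) by auto.
  rewrite <- sum_n_minusR. unfold Rdiv. rewrite Rmult_comm, <- sum_n_scalR.
  apply sum_n_extR. intros k. replace (T k - (t + h)) with (T k - t - h) by ring.
  rewrite <- (RInt_ChaslesR fnu (clamp (-q) 0 (T k - t - h)) (clamp (-q) 0 (T k - t)))
    by apply (ex_RInt_clamp fnu q Hq Hfnu).
  field. auto.
Qed.

Definition nu_term_rderiv t N := sum_n (fun k => jump_mass k * density_right fnu q (T k - t)) N.
Definition nu_term_lderiv t N := sum_n (fun k => jump_mass k * density_left fnu q (T k - t)) N.

Lemma nu_term_right N M t : jumps_after N M -> 0 <= t < M ->
  filterlim (fun h => (nu_term (t + h) - nu_term t) / h) (at_right 0)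
    (locally (nu_term_rderiv t N)).
Proof.
  intros HN Ht.
  apply (filterlim_ext_loc (fun h => sum_n (fun k => jump_mass k *
    (RInt fnu (clamp (-q) 0 (T k - t - h)) (clamp (-q) 0 (T k - t)) / h)) N)).
  - apply (within_locally_intro _ _ 0 (M - t)); [lra|]. intros h Hh Hhd. simpl in Hh.
    rewrite Rminus_0_r, Rabs_right in Hhd by lra. symmetry. apply (nu_term_quotient N M); auto; lra.
  - apply lim_sum_n. intros k _. apply lim_scal. now apply RInt_clamp_quotient_right.
Qed.

Lemma nu_term_left N M t : jumps_after N M -> 0 < t <= M ->
  filterlim (fun h => (nu_term (t + h) - nu_term t) / h) (at_left 0)
    (locally (nu_term_lderiv t N)).
Proof.
  intros HN Ht.
  apply (filterlim_ext_loc (fun h => sum_n (fun k => jump_mass k *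
    (RInt fnu (clamp (-q) 0 (T k - t - h)) (clamp (-q) 0 (T k - t)) / h)) N)).
  - apply (within_locally_intro _ _ 0 t); [lra|]. intros h Hh Hhd. simpl in Hh.
    rewrite Rminus_0_r, Rabs_left in Hhd by lra. symmetry. apply (nu_term_quotient N M); auto; lra.
  - apply lim_sum_n. intros k _. apply lim_scal. now apply RInt_clamp_quotient_left.
Qed.

Lemma mu_term_right t : 0 <= t ->
  filterlim (fun h => (integrated_weighted_delay fmu X p (t + h)
                       - integrated_weighted_delay fmu X p t) / h)
    (at_right 0) (locally (weighted_delay fmu X p t)).
Proof.
  intros Ht. destruct fmu_bounded as [W HW]. pose proof (Rmax_l p q).
  eapply (filterlim_within_subdomain _ _ _ _ _ 1); [lra| |].
  2:{ apply (integrated_weighted_delay_derivative X fmu (- r) (t + 1) p W); auto;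
      [apply cadlag_X | unfold r; lra | lra | now apply cadlag_continuous_on | lra]. }
  intros h Hh Hhd. simpl in Hh. rewrite Rminus_0_r, Rabs_right in Hhd by lra. lra.
Qed.

Lemma mu_term_left t : 0 < t ->
  filterlim (fun h => (integrated_weighted_delay fmu X p (t + h)
                       - integrated_weighted_delay fmu X p t) / h)
    (at_left 0) (locally (weighted_delay fmu X p t)).
Proof.
  intros Ht. destruct fmu_bounded as [W HW]. pose proof (Rmax_l p q).
  eapply (filterlim_within_subdomain _ _ _ _ _ t); [lra| |].
  2:{ apply (integrated_weighted_delay_derivative X fmu (- r) (t + 1) p W); auto;
      [apply cadlag_X | unfold r; lra | lra | now apply cadlag_continuous_on | lra]. }
  intros h Hh Hhd. simpl in Hh. rewrite Rminus_0_r, Rabs_left in Hhd by lra. lra.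
Qed.

Lemma intX_increment t h : 0 <= t -> 0 <= t + h -> intX (t + h) - intX t = RInt X t (t + h).
Proof.
  intros Ht Hth. pose proof (Rmax_l p q). pose proof (Rmax_r p q).
  pose proof (Rmax_l t (t + h)). pose proof (Rmax_r t (t + h)). set (M := Rmax t (t + h)) in *.
  unfold intX. rewrite !(RInt_cadlag_Chasles X (- r) M (cadlag_X M) 0), 
    (RInt_cadlag_Chasles X (- r) M (cadlag_X M) t) by (unfold r; lra). ring.
Qed.

Lemma intX_right t : 0 <= t ->
  filterlim (fun h => (intX (t + h) - intX t) / h) (at_right 0) (locally (X t)).
Proof.
  intros Ht. pose proof (Rmax_l p q). pose proof (Rmax_r p q).
  apply filterlim_within_eps. intros e He.
  destruct (proj1 (filterlim_at_right_eps X t (X t)) (HXr t ltac:(lra)) (e / 2) ltac:(lra))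
    as [d [Hd K]].
  exists (Rmin d 1). split; [apply Rmin_pos; lra|]. intros h Hh Hhd. simpl in Hh.
  pose proof (Rmin_l d 1). pose proof (Rmin_r d 1). rewrite Rminus_0_r, Rabs_right in Hhd by lra.
  rewrite intX_increment by lra.
  eapply Rle_lt_trans; [apply (RInt_average_close X (- r) (t + 1) (cadlag_X _) t h (e / 2));
                        unfold r; try lra|lra].
  intros y Hy. rewrite Rmin_left, Rmax_right in Hy by lra.
  destruct (Req_dec y t) as [-> | ]; [rewrite Rminus_diag, Rabs_R0; lra|]. left. apply K. lra.
Qed.

Lemma intX_left t : 0 < t -> filterlim X (at_left t) (locally (X t)) ->
  filterlim (fun h => (intX (t + h) - intX t) / h) (at_left 0) (locally (X t)).
Proof.
  intros Ht HL. pose proof (Rmax_l p q). pose proof (Rmax_r p q).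
  apply filterlim_within_eps. intros e He.
  destruct (proj1 (filterlim_at_left_eps X t (X t)) HL (e / 2) ltac:(lra)) as [d [Hd K]].
  exists (Rmin d t). split; [apply Rmin_pos; lra|]. intros h Hh Hhd. simpl in Hh.
  pose proof (Rmin_l d t). pose proof (Rmin_r d t). rewrite Rminus_0_r, Rabs_left in Hhd by lra.
  rewrite intX_increment by lra.
  eapply Rle_lt_trans; [apply (RInt_average_close X (- r) (t + 1) (cadlag_X _) t h (e / 2));
                        unfold r; try lra|lra].
  intros y Hy. rewrite Rmin_right, Rmax_left in Hy by lra.
  destruct (Req_dec y t) as [-> | ]; [rewrite Rminus_diag, Rabs_R0; lra|]. left. apply K. lra.
Qed.

Lemma intX_left_continuous t : 0 < t -> filterlim intX (at_left t) (locally (intX t)).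
Proof.
  intros Ht. pose proof (Rmax_l p q). pose proof (Rmax_r p q).
  destruct (cadlag_bounded X (- r) t ltac:(unfold r; lra) (cadlag_X t)) as [B [HB0 HB]].
  apply filterlim_at_left_eps. intros e He. exists (Rmin t (e / (B + 1))).
  pose proof (Rmin_l t (e / (B + 1))). pose proof (Rmin_r t (e / (B + 1))).
  split; [apply Rmin_pos; [lra | apply Rdiv_lt_0_compat; lra]|]. intros y Hy.
  replace y with (t + (y - t)) by ring. rewrite intX_increment by lra.
  replace (t + (y - t)) with y by ring.
  eapply Rle_lt_trans; [apply (abs_RInt_cadlag_le X (- r) t B (cadlag_X t) HB); unfold r; lra|].
  rewrite Rabs_left by lra.
  apply Rle_lt_trans with ((B + 1) * (t - y)); [nra|].
  apply Rlt_le_trans with ((B + 1) * (e / (B + 1))); [apply Rmult_lt_compat_l; lra|].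
  right. field. lra.
Qed.

Lemma X_quotient_limit (F : (R -> Prop) -> Prop) {FF : Filter F} t la li lb ld :
  0 <= t -> F (fun h => h <> 0 /\ 0 <= t + h) ->
  filterlim (fun h => (integrated_weighted_delay fmu X p (t + h)
                       - integrated_weighted_delay fmu X p t) / h) F (locally la) ->
  filterlim (fun h => (intX (t + h) - intX t) / h) F (locally li) ->
  filterlim (fun h => (nu_term (t + h) - nu_term t) / h) F (locally lb) ->
  filterlim (fun h => (jump_term (t + h) - jump_term t) / h) F (locally ld) ->
  filterlim (fun h => (X (t + h) - X t) / h) F
    (locally (eta + (la - cmu * li) + (lb + cnu * ld))).
Proof.
  intros Ht HF HA HI HB HD.
  apply (filterlim_ext_loc (fun h => eta
      + ((integrated_weighted_delay fmu X p (t + h) - integrated_weighted_delay fmu X p t) / h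
         - cmu * ((intX (t + h) - intX t) / h))
      + ((nu_term (t + h) - nu_term t) / h + cnu * ((jump_term (t + h) - jump_term t) / h)))).
  - apply (filter_imp (fun h => h <> 0 /\ 0 <= t + h)); [|exact HF].
    intros h [Hh0 Hh]. rewrite !X_eq_rhs by lra. unfold rhs. field. exact Hh0.
  - apply lim_plus; [apply lim_plus; [apply filterlim_const | apply lim_minus] | apply lim_plus];
      auto; now apply lim_scal.
Qed.

Lemma xi_finite N M t : jumps_after N M -> t <= M ->
  xi p q fmu fnu T J X Xm t = weighted_delay fmu X p t + nu_term_rderiv t N.
Proof.
  intros HN Ht. unfold xi. f_equal. rewrite (Series_finite _ N).
  - apply sum_n_extR. intros k. unfold density_right, jump_mass.
    destruct (Rlt_dec (t - q) (T k)), (Rle_dec (T k) t), (Rlt_dec (- q) (T k - t));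
      try destruct (Rle_dec (T k - t) 0); try lra; ring.
  - intros k Hk. specialize (HN k Hk).
    destruct (Rlt_dec (t - q) (T k)); [|reflexivity].
    destruct (Rle_dec (T k) t); [lra | reflexivity].
Qed.

Lemma X_right t d : 0 <= t -> 0 < d -> (forall k, ~ (t < T k < t + d)) ->
  filterlim (fun h => (X (t + h) - X t) / h) (at_right 0)
    (locally (eta - cmu * X t + xi p q fmu fnu T J X Xm t)).
Proof.
  intros Ht Hd Hgap. destruct (jumps_after_exists (t + 1)) as [N HN].
  rewrite (xi_finite N (t + 1)) by (auto; lra).
  replace (eta - cmu * X t + (weighted_delay fmu X p t + nu_term_rderiv t N))
    with (eta + (weighted_delay fmu X p t - cmu * X t) + (nu_term_rderiv t N + cnu * 0)) by ring.
  apply (X_quotient_limit (at_right 0)); auto.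
  - apply (within_locally_intro _ _ 0 1); [lra|]. intros h Hh _. simpl in Hh. lra.
  - now apply mu_term_right.
  - now apply intX_right.
  - apply (nu_term_right N (t + 1)); auto; lra.
  - apply filterlim_locally_constant; [apply at_right_proper_filter|].
    apply (within_locally_intro _ _ 0 d Hd). intros h Hh Hhd. simpl in Hh.
    rewrite Rminus_0_r, Rabs_right in Hhd by lra.
    rewrite (jump_term_constant t (t + h)); [unfold Rdiv; ring | lra|].
    intros k Hk. apply (Hgap k). lra.
Qed.

Lemma X_left t d : fnu (- q) = 0 -> 0 < t -> 0 < d -> (forall k, ~ (t - d < T k <= t)) ->
  filterlim X (at_left t) (locally (X t)) ->
  filterlim (fun h => (X (t + h) - X t) / h) (at_left 0)
    (locally (eta - cmu * X t + xi p q fmu fnu T J X Xm t)).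
Proof.
  intros Hq0 Ht Hd Hgap HL. destruct (jumps_after_exists (t + 1)) as [N HN].
  rewrite (xi_finite N (t + 1)) by (auto; lra).
  assert (E : nu_term_rderiv t N = nu_term_lderiv t N).
  { apply sum_n_extR. intros k. f_equal. symmetry. apply density_left_right_eq; auto.
    specialize (Hgap k). lra. }
  replace (eta - cmu * X t + (weighted_delay fmu X p t + nu_term_rderiv t N))
    with (eta + (weighted_delay fmu X p t - cmu * X t) + (nu_term_lderiv t N + cnu * 0))
    by (rewrite E; ring).
  apply (X_quotient_limit (at_left 0)); auto; try lra.
  - apply (within_locally_intro _ _ 0 t); [lra|]. intros h Hh Hhd. simpl in Hh.
    rewrite Rminus_0_r, Rabs_left in Hhd by lra. lra.
  - now apply mu_term_left.
  - now apply intX_left.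
  - apply (nu_term_left N (t + 1)); auto; lra.
  - apply filterlim_locally_constant; [apply at_left_proper_filter|].
    apply (within_locally_intro _ _ 0 (Rmin d t)); [apply Rmin_pos; lra|].
    intros h Hh Hhd. simpl in Hh. pose proof (Rmin_l d t). pose proof (Rmin_r d t).
    rewrite Rminus_0_r, Rabs_left in Hhd by lra.
    rewrite <- (jump_term_constant (t + h) t); [unfold Rdiv; ring | lra|].
    intros k Hk. apply (Hgap k). lra.
Qed.

Definition jump_sum t N (a : nat -> R) : R :=
  sum_n (fun k => if Req_EM_T (T k) t then a k else 0) N.

Lemma jump_series_left_limit (a : nat -> R) t N : jumps_after N (t + 1) ->
  left_lim (fun s => Series (fun k => if Rle_dec (T k) s then a k else 0)) t
    (Series (fun k => if Rle_dec (T k) t then a k else 0) - jump_sum t N a).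
Proof.
  intros HN. destruct (incr_left_gap T HT HTu t) as [d [Hd Hgap]].
  assert (Hfin : forall s, s <= t + 1 -> Series (fun k => if Rle_dec (T k) s then a k else 0)
                                  = sum_n (fun k => if Rle_dec (T k) s then a k else 0) N).
  { intros s Hs. apply Series_finite. intros k Hk. specialize (HN k Hk).
    destruct Rle_dec; [lra | reflexivity]. }
  apply filterlim_locally_constant; [apply at_left_proper_filter|].
  apply (within_locally_intro _ _ t d Hd). intros s Hs Hsd. simpl in Hs.
  apply Rabs_lt_between' in Hsd. rewrite !Hfin by lra. unfold jump_sum.
  rewrite <- sum_n_minusR. apply sum_n_extR. intros k. specialize (Hgap k).
  destruct (Rle_dec (T k) t), (Rle_dec (T k) s), (Req_EM_T (T k) t); try lra; exfalso; lra.
Qed.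

Lemma jump_term_left t N : jumps_after N (t + 1) -> 0 < t ->
  exists d, 0 < d /\ forall s, t - d < s < t -> jump_term s = jump_term t - jump_sum t N jump_mass.
Proof.
  intros HN Ht. destruct (incr_left_gap T HT HTu t) as [d [Hd Hgap]].
  exists d. split; [exact Hd|]. intros s Hs.
  unfold jump_term. rewrite !(dS_int_finite N (t + 1)) by (auto; lra). unfold jump_sum.
  rewrite <- sum_n_minusR. apply sum_n_extR. intros k. specialize (Hgap k).
  destruct (Rlt_dec 0 (T k)), (Rle_dec (T k) t), (Rle_dec (T k) s), (Req_EM_T (T k) t);
    try lra; exfalso; lra.
Qed.

(* All terms of [rhs] except the jump term are left-continuous. *)
Lemma Xm_eq t N : jumps_after N (t + 1) -> 0 < t ->
  Xm t = rhs t - cnu * jump_sum t N jump_mass.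
Proof.
  intros HN Ht. destruct (jump_term_left t N HN Ht) as [d [Hd HD]].
  apply (filterlim_locally_unique (F := at_left t) X).
  { apply HXl. pose proof (Rmax_l p q). lra. }
  apply (filterlim_ext_loc (fun s => X 0 + eta * s
      + (integrated_weighted_delay fmu X p s - cmu * intX s)
      + (nu_term s + cnu * (jump_term t - jump_sum t N jump_mass)))).
  - apply (within_locally_intro _ _ t (Rmin d t)); [apply Rmin_pos; lra|].
    intros s Hs Hsd. simpl in Hs. pose proof (Rmin_l d t). pose proof (Rmin_r d t).
    apply Rabs_lt_between' in Hsd. rewrite (X_eq_rhs s) by lra. unfold rhs. rewrite (HD s) by lra.
    reflexivity.
  - assert (Hid : filterlim (fun s => s) (at_left t) (locally t))
      by (eapply filterlim_filter_le_1; [apply filter_le_within | apply filterlim_id]).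
    replace (rhs t - cnu * jump_sum t N jump_mass) with (X 0 + eta * t
      + (integrated_weighted_delay fmu X p t - cmu * intX t)
      + (nu_term t + cnu * (jump_term t - jump_sum t N jump_mass))) by (unfold rhs; ring).
    apply lim_plus; [apply lim_plus; [apply lim_plus | apply lim_minus] | apply lim_plus].
    + apply filterlim_const.
    + now apply lim_scal.
    + apply (left_continuous_of_left_quotient _ _ _ (mu_term_left t Ht)).
    + apply lim_scal, intX_left_continuous, Ht.
    + apply (left_continuous_of_left_quotient _ _ _ (nu_term_left N (t + 1) t HN ltac:(lra))).
    + apply filterlim_const.
Qed.

Lemma jump_sum_sq t N (a : nat -> R) : jump_sum t N a ^ 2 = jump_sum t N (fun k => a k ^ 2).
Proof.
  unfold jump_sum.
  destruct (classic (exists m, (m <= N)%nat /\ T m = t)) as [[m [Hm Em]] | Hn].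
  - assert (Hk : forall b : nat -> R, forall k, (k <= N)%nat -> k <> m ->
                   (if Req_EM_T (T k) t then b k else 0) = 0).
    { intros b k _ Hkm. destruct Req_EM_T as [E|]; [|reflexivity].
      exfalso. apply Hkm. apply (incr_inj T HT). congruence. }
    rewrite !(sum_n_single _ N m Hm) by now apply Hk.
    destruct Req_EM_T; [reflexivity | contradiction].
  - rewrite !sum_n_zero; [ring | |]; intros k Hk; destruct Req_EM_T; auto;
      exfalso; apply Hn; now exists k.
Qed.

Lemma X_jump gam t : 0 < t ->
  exists lS lL,
    left_lim (cp_S T J) t lS /\ left_lim (cp_L gam (Rmax p q) T J) t lL /\
    X t - Xm t = cnu * Xm t * (cp_S T J t - lS) /\
    cp_S T J t - lS = (cp_L gam (Rmax p q) T J t - lL) ^ 2.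
Proof.
  intros Ht. destruct (jumps_after_exists (t + 1)) as [N HN].
  exists (cp_S T J t - jump_sum t N (fun k => J k ^ 2)),
    (cp_L gam (Rmax p q) T J t - jump_sum t N J).
  split; [|split; [|split]].
  - apply (jump_series_left_limit (fun k => J k ^ 2) t N HN).
  - unfold cp_L. replace (gam * (t + Rmax p q) + _ - _) with (gam * (t + Rmax p q)
      + (Series (fun k => if Rle_dec (T k) t then J k else 0) - jump_sum t N J)) by ring.
    apply lim_plus; [|apply (jump_series_left_limit J t N HN)].
    apply lim_scal, (lim_plus (fun s => s) (fun _ => Rmax p q)); [|apply filterlim_const].
    eapply filterlim_filter_le_1; [apply filter_le_within | apply filterlim_id].
  - rewrite (Xm_eq t N HN Ht) at 1. rewrite X_eq_rhs by lra.
    assert (E : jump_sum t N jump_mass = Xm t * jump_sum t N (fun k => J k ^ 2)).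
    { unfold jump_sum. rewrite <- sum_n_scalR. apply sum_n_extR. intros k.
      unfold jump_mass. destruct Req_EM_T as [E|]; [now rewrite E | ring]. }
    rewrite E. ring.
  - rewrite <- (jump_sum_sq t N J). ring.
Qed.

Lemma xi_continuous_between_jumps n t : fnu (- q) = 0 -> Rmax (T n) 0 <= t < T (S n) ->
  filterlim (xi p q fmu fnu T J X Xm)
    (within (fun s => Rmax (T n) 0 <= s < T (S n)) (locally t))
    (locally (xi p q fmu fnu T J X Xm t)).
Proof.
  intros Hq0 Ht. pose proof (Rmax_l (T n) 0). pose proof (Rmax_r (T n) 0). pose proof (Rmax_l p q).
  destruct (jumps_after_exists (t + 1)) as [N HN]. destruct fmu_bounded as [W HW].
  apply (filterlim_ext_loc (fun s => weighted_delay fmu X p s + nu_term_rderiv s N)).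
  { apply (within_locally_intro _ _ t 1); [lra|]. intros s Hs Hst. simpl in Hs.
    apply Rabs_lt_between' in Hst. symmetry. apply (xi_finite N (t + 1)); auto; lra. }
  rewrite (xi_finite N (t + 1)) by (auto; lra). apply lim_plus.
  - eapply (filterlim_within_subdomain _ _ _ _ _ 1); [lra| |].
    2:{ apply (weighted_delay_continuous X fmu (- r) (t + 1) p W); auto;
        try apply cadlag_X; try (now apply cadlag_continuous_on); unfold r; lra. }
    intros s Hs Hst. simpl in Hs. apply Rabs_lt_between' in Hst. unfold r. lra.
  - apply lim_sum_n. intros k _. apply lim_scal.
    destruct (Compare_dec.le_lt_dec k n) as [Hkn | Hkn].
    + pose proof (incr_le T HT k n Hkn).
      eapply filterlim_comp; [|apply density_right_continuous; auto; lra].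
      intros P [eps HP]. exists eps. intros s Hs HDs. simpl in HDs. apply HP; [|simpl; lra].
      apply ball_Rabs. apply ball_Rabs in Hs. now replace (T k - s - (T k - t)) with (- (s - t))
        by ring; rewrite Rabs_Ropp.
    + pose proof (incr_le T HT (S n) k Hkn).
      apply filterlim_locally_constant; [exact _|].
      exists (mkposreal 1 Rlt_0_1). intros s _ Hs. simpl in Hs.
      unfold density_right. destruct Rlt_dec; [destruct Rle_dec|]; try lra.
      symmetry. unfold density_right. destruct Rlt_dec; [destruct Rle_dec|]; lra.
Qed.

Lemma X_right_derivative_at_jump n : Rmax (T n) 0 < T (S n) ->
  filterlim (fun h => (X (Rmax (T n) 0 + h) - X (Rmax (T n) 0)) / h) (at_right 0)
    (locally (eta - cmu * X (Rmax (T n) 0) + xi p q fmu fnu T J X Xm (Rmax (T n) 0))).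
Proof.
  intros Ha. pose proof (Rmax_l (T n) 0). pose proof (Rmax_r (T n) 0).
  apply (X_right _ (T (S n) - Rmax (T n) 0)); try lra.
  intros k Hk. apply (incr_gap T HT n k). lra.
Qed.

Lemma X_derivative_between_jumps n t : fnu (- q) = 0 -> Rmax (T n) 0 < t < T (S n) ->
  is_derive X t (eta - cmu * X t + xi p q fmu fnu T J X Xm t).
Proof.
  intros Hq0 Ht. pose proof (Rmax_l (T n) 0). pose proof (Rmax_r (T n) 0).
  assert (Hgap : forall k, ~ (Rmax (T n) 0 < T k < T (S n))).
  { intros k Hk. apply (incr_gap T HT n k). lra. }
  assert (HL : filterlim X (at_left t) (locally (X t))).
  { destruct (jumps_after_exists (t + 1)) as [N HN].
    replace (X t) with (Xm t).
    - apply HXl. pose proof (Rmax_l p q). lra.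
    - rewrite (Xm_eq t N HN), (X_eq_rhs t) by lra. unfold jump_sum.
      rewrite sum_n_zero; [ring|]. intros k _.
      destruct Req_EM_T; [|reflexivity]. exfalso. apply (Hgap k). lra. }
  apply is_derive_of_one_sided.
  - apply (X_right _ (T (S n) - t)); try lra. intros k Hk. apply (Hgap k). lra.
  - apply (X_left _ (t - Rmax (T n) 0)); auto; try lra. intros k Hk. apply (Hgap k). lra.
Qed.

Lemma xi_without_jump_kernel t : q = 0 -> xi p q fmu fnu T J X Xm t = weighted_delay fmu X p t.
Proof.
  intros Hq0. unfold xi. rewrite Series_zero; [apply Rplus_0_r|].
  intros k. destruct Rlt_dec; [destruct Rle_dec; lra | reflexivity].
Qed.

Lemma delay_ode_between_jumps n t : fnu (- q) = 0 -> q = 0 -> Rmax (T n) 0 < t < T (S n) ->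
  is_derive X t (eta - cmu * X t + RInt (fun u => fmu u * X (t + u)) (- p) 0).
Proof.
  intros Hq0 Hq1 Ht.
  replace (RInt _ (- p) 0) with (xi p q fmu fnu T J X Xm t) by now rewrite xi_without_jump_kernel.
  now apply (X_derivative_between_jumps n).
Qed.

Lemma ode_between_jumps n t : 0 < cmu -> fnu (- q) = 0 -> p = 0 -> q = 0 ->
  T n < t < T (S n) -> X t = eta / cmu + (X (T n) - eta / cmu) * exp (- cmu * (t - T n)).
Proof.
  intros Hcmu Hq0 Hp0 Hq1 Ht.
  assert (HTn : 0 < T n).
  { pose proof (incr_le T HT 0 n ltac:(lia)). rewrite Hp0, Hq1, Rmax_left in HT0; lra. }
  apply (linear_ode_solution X (T n) (T (S n))); auto; try lra.
  - apply HXr. pose proof (Rmax_l p q). pose proof (Rmax_r p q). lra.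
  - intros s Hs.
    pose proof (X_derivative_between_jumps n s Hq0 ltac:(rewrite Rmax_left; lra)) as H.
    rewrite xi_without_jump_kernel in H by exact Hq1. unfold weighted_delay in H.
    now rewrite Hp0, Ropp_0, RInt_pointR, Rplus_0_r in H.
Qed.

End Model.

Theorem proposition4p10
  (p q eta cmu cnu gam : R) (fmu fnu : R -> R) (T J : nat -> R) (X Xm : R -> R) :
  0 <= p -> 0 <= q -> 0 < eta -> 0 < cmu -> 0 < cnu ->
  (* f_mu, f_nu nonnegative and continuous on [-p,0], [-q,0] *)
  (forall u, - p <= u <= 0 -> 0 <= fmu u) ->
  (forall u, - p <= u <= 0 ->
     filterlim fmu (within (fun v => - p <= v <= 0) (locally u)) (locally (fmu u))) ->
  (forall u, - q <= u <= 0 -> 0 <= fnu u) ->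
  (forall u, - q <= u <= 0 ->
     filterlim fnu (within (fun v => - q <= v <= 0) (locally u)) (locally (fnu u))) ->
  (* compound Poisson path: -r < T_0 < T_1 < ..., T_n -> oo, nonzero jump sizes *)
  (forall n, T n < T (Datatypes.S n)) ->
  - Rmax p q < T 0%nat ->
  (forall M, exists n, M < T n) ->
  (forall n, J n <> 0) ->
  (* X is cadlag on [-r,oo), Xm its left-limit process *)
  (forall t, - Rmax p q <= t -> filterlim X (at_right t) (locally (X t))) ->
  (forall t, - Rmax p q < t -> left_lim X t (Xm t)) ->
  (* X solves the CDGARCH(p,q) equation for t > 0 *)
  (forall t, 0 < t -> cdgarch_eq p q eta cmu cnu fmu fnu T J X Xm t) ->
  (* (a) *)
  (forall t, 0 < t ->
     exists lS lL,
       left_lim (cp_S T J) t lS /\ left_lim (cp_L gam (Rmax p q) T J) t lL /\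
       X t - Xm t = cnu * Xm t * (cp_S T J t - lS) /\
       cp_S T J t - lS = (cp_L gam (Rmax p q) T J t - lL) ^ 2)
  /\
  (* (b) *)
  (fnu (- q) = 0 ->
     (forall n t, Rmax (T n) 0 <= t < T (Datatypes.S n) ->
        filterlim (xi p q fmu fnu T J X Xm)
          (within (fun s => Rmax (T n) 0 <= s < T (Datatypes.S n)) (locally t))
          (locally (xi p q fmu fnu T J X Xm t)))
     /\
     (forall n, Rmax (T n) 0 < T (Datatypes.S n) ->
                filterlim (fun h => (X (Rmax (T n) 0 + h) - X (Rmax (T n) 0)) / h)
                  (at_right 0)
                  (locally (eta - cmu * X (Rmax (T n) 0)
                            + xi p q fmu fnu T J X Xm (Rmax (T n) 0))))
     /\
     (forall n t, Rmax (T n) 0 < t < T (Datatypes.S n) ->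
        is_derive X t (eta - cmu * X t + xi p q fmu fnu T J X Xm t))
     /\
     (0 < p -> q = 0 ->
        forall n t, Rmax (T n) 0 < t < T (Datatypes.S n) ->
          is_derive X t (eta - cmu * X t + RInt (fun u => fmu u * X (t + u)) (- p) 0))
     /\
     (p = 0 -> q = 0 ->
        forall n t, T n < t < T (Datatypes.S n) ->
          X t = eta / cmu + (X (T n) - eta / cmu) * exp (- cmu * (t - T n)))).
Proof.
  intros Hp Hq _ Hcmu _ Hfmu0 Hfmu _ Hfnu HT HT0 HTu _ HXr HXl Heq.
  split; [|intros Hq0; split; [|split; [|split; [|split]]]].
  - intros t Ht. eapply (X_jump p q eta cmu cnu fmu fnu T J X Xm); eassumption.
  - intros n t Ht. eapply (xi_continuous_between_jumps p q fmu fnu T J X Xm); eassumption.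
  - intros n Hn. eapply (X_right_derivative_at_jump p q eta cmu cnu fmu fnu T J X Xm); eassumption.
  - intros n t Ht.
    eapply (X_derivative_between_jumps p q eta cmu cnu fmu fnu T J X Xm); eassumption.
  - intros _ Hq1 n t Ht.
    eapply (delay_ode_between_jumps p q eta cmu cnu fmu fnu T J X Xm); eassumption.
  - intros Hp0 Hq1 n t Ht. eapply (ode_between_jumps p q eta cmu cnu fmu fnu T J X Xm); eassumption.
Qed.
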